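(* (1) For each $f\in\mathcal A_C$, the map $\Phi_f:\mathcal{BV}\to C^0(\overline{\mathbb R})$, $\Phi_f[g]=f*g$, is a bounded linear operator (with $\mathcal{BV}$ normed by $\|\cdot\|_{\mathcal{BV}}$ and $C^0(\overline{\mathbb R})$ by $\|\cdot\|_\infty$) with $\|\Phi_f\|\le\|f\|$, and there exists a nonzero $f\in\mathcal A_C$ with $\|\Phi_f\|=\|f\|$. (2) For each $g\in\mathcal{BV}$, the map $\Psi_g:\mathcal A_C\to C^0(\overline{\mathbb R})$, $\Psi_g[f]=f*g$, is a bounded linear operator (with $\mathcal A_C$ normed by the Alexiewicz norm) with $\|\Psi_g\|\le\|g\|_{\mathcal{BV}}$, and there exists a nonzero $g\in\mathcal{BV}$ with $\|\Psi_g\|=\|g\|_{\mathcal{BV}}$.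
   Context: Notation: $\mathcal D=C_c^\infty(\mathbb R)$, $\mathcal D'$ the Schwartz distributions; derivatives of distributions are distributional derivatives. $\overline{\mathbb R}=[-\infty,\infty]$, $F(\pm\infty)=\lim_{x\to\pm\infty}F(x)$. $C^0(\overline{\mathbb R})$ is the set of continuous $F:\mathbb R\to\mathbb R$ with finite limits at $\pm\infty$, normed by $\|F\|_\infty=\sup_{\mathbb R}|F|$. $\mathcal B_C=\{F\in C^0(\overline{\mathbb R}):F(-\infty)=0\}$. $\mathcal A_C=\{f\in\mathcal D': f=F' \text{ for some } F\in\mathcal B_C\}$; the primitive $F\in\mathcal B_C$ is unique, and $\int_a^bf=F(b)-F(a)$ for $a,b\in\overline{\mathbb R}$. The Alexiewicz norm is $\|f\|=\sup_I|\int_If|$ over all intervals $I\subset\mathbb R$. $\mathcal{BV}$ is the set of $g:\mathbb R\to\mathbb R$ with finite variation $Vg=\sup\sum_i|g(x_i)-g(y_i)|$ (supremum over finite families of disjoint intervals $(x_i,y_i)$), with norm $\|g\|_{\mathcal{BV}}=|g(-\infty)|+Vg$. For $h\in\mathcal A_C$ with primitive $H$ and $g\in\mathcal{BV}$, $\int_{-\infty}^\infty hg=H(\infty)g(\infty)-\int_{-\infty}^\infty H\,dg$ (Henstock–Stieltjes integral). For $f\in\mathcal A_C$ with primitive $F$ and $x\in\mathbb R$, $f(x-\cdot)$ is the element of $\mathcal A_C$ with primitive $y\mapsto F(\infty)-F(x-y)$, and $f*g(x)=\int_{-\infty}^\infty f(x-y)g(y)\,dy$ is the product integral of $f(x-\cdot)$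 and $g$. (It is known that $f*g\in C^0(\overline{\mathbb R})$.) *)

From Stdlib Require Import Reals Lra ClassicalEpsilon.
Open Scope R_scope.

(** Supremum of a set of reals (meaningful when the set is nonempty and
    bounded above, in which case it is the least upper bound). *)
Definition Rsup (E : R -> Prop) : R :=
  epsilon (inhabits 0) (fun l => is_lub E l).

Definition lim_pinf (F : R -> R) (l : R) : Prop :=
  forall eps, 0 < eps -> exists M, forall x, M < x -> Rabs (F x - l) < eps.
Definition lim_minf (F : R -> R) (l : R) : Prop :=
  forall eps, 0 < eps -> exists M, forall x, x < M -> Rabs (F x - l) < eps.
Definition val_pinf (F : R -> R) : R := epsilon (inhabits 0) (lim_pinf F).
Definition val_minf (F : R -> R) : R := epsilon (inhabits 0) (lim_minf F).

(** C^0(extended R): continuous with finite limits at +-oo. *)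
Definition C0bar (F : R -> R) : Prop :=
  continuity F /\ (exists l, lim_pinf F l) /\ (exists l, lim_minf F l).

Definition Bc (F : R -> R) : Prop := C0bar F /\ lim_minf F 0.

Definition sup_norm (F : R -> R) : R :=
  Rsup (fun r => exists x, r = Rabs (F x)).

(** An element f of A_C is represented by its (unique) primitive F in B_C
    (f = F').  int_a^b f = F b - F a.  Alexiewicz norm of f = F'. *)
Definition alex_norm (F : R -> R) : R :=
  Rsup (fun r => exists a b, r = Rabs (F b - F a)).

Fixpoint rsum (n : nat) (f : nat -> R) : R :=
  match n with O => 0 | S k => rsum k f + f k end.

Definition disjoint_family (n : nat) (x y : nat -> R) : Prop :=
  (forall i, (i < n)%nat -> x i < y i) /\
  (forall i j, (i < n)%nat -> (j < n)%nat -> i <> j ->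
     y i <= x j \/ y j <= x i).

Definition var_sums (g : R -> R) : R -> Prop :=
  fun r => exists n x y, disjoint_family n x y /\
             r = rsum n (fun i => Rabs (g (x i) - g (y i))).

Definition BV (g : R -> R) : Prop :=
  exists M, forall r, var_sums g r -> r <= M.

Definition variation (g : R -> R) : R := Rsup (var_sums g).

Definition bv_norm (g : R -> R) : R := Rabs (val_minf g) + variation g.

Definition HS_integral_ab (H g : R -> R) (a b I : R) : Prop :=
  forall eps, 0 < eps ->
  exists delta : R -> R, (forall t, a <= t <= b -> 0 < delta t) /\
  forall (n : nat) (p t : nat -> R),
    p 0%nat = a -> p n = b ->
    (forall i, (i < n)%nat ->
        p i <= t i <= p (S i) /\
        t i - delta (t i) < p i /\ p (S i) < t i + delta (t i)) ->
    Rabs (rsum n (fun i => H (t i) * (g (p (S i)) - g (p i))) - I) < eps.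

Definition HS_integral (H g : R -> R) (I : R) : Prop :=
  exists J : R -> R -> R,
    (forall a b, a < b -> HS_integral_ab H g a b (J a b)) /\
    (forall eps, 0 < eps -> exists M, forall a b,
        a < - M -> M < b -> Rabs (J a b - I) < eps).

Definition HS_int (H g : R -> R) : R := epsilon (inhabits 0) (HS_integral H g).

(** Primitive of f(x - .) when F is the primitive of f. *)
Definition refl_prim (F : R -> R) (x : R) : R -> R :=
  fun y => val_pinf F - F (x - y).

(** Convolution f*g(x) = H(oo) g(oo) - int H dg, with H = refl_prim F x. *)
Definition conv (F g : R -> R) (x : R) : R :=
  val_pinf (refl_prim F x) * val_pinf g - HS_int (refl_prim F x) g.

Definition op_norm_Phi (F : R -> R) : R :=
  Rsup (fun r => exists g, BV g /\ (exists x, g x <> 0) /\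
                  r = sup_norm (conv F g) / bv_norm g).

Definition op_norm_Psi (g : R -> R) : R :=
  Rsup (fun r => exists F, Bc F /\ (exists x, F x <> 0) /\
                  r = sup_norm (conv F g) / alex_norm F).

(** Write  f = F'  with  F in B_C.  By the product formula,
        f*g(x) = F(oo) g(-oo) + int F(x-y) dg(y),
    so everything reduces to the Henstock--Stieltjes integral  int H dg  of a
    bounded, uniformly continuous  H  against  g in BV.  For such integrands
    the Riemann--Stieltjes sums over partitions of small constant mesh form a
    Cauchy net: two sums of mesh < delta differ by at most
    osc_{2 delta}(H) * (v(b) - v(a)), where  v  is the variation function of
    g  (a nondecreasing majorant of  |g(y) - g(x)| ).  This yields existence,
    uniqueness and linearity of the integral, the estimate
    |int H dg| <= sup|H| * Vg, and refined tail estimates.  From them the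
    convolution is shown to be continuous with limits at +-oo and to satisfy
    |f*g(x)| <= ||f|| ||g||_BV, giving both operator-norm bounds.  Equality
    of norms is witnessed by the ramp primitive  F = clamp(x,0,1)  paired with
    the constant function  g = 1,  for which  f*g = 1  and all norms are 1. *)

From Stdlib Require Import Reals Lra Lia ClassicalEpsilon Classical FunctionalExtensionality.
Open Scope R_scope.

Lemma le_eps (x y : R) : (forall e, 0 < e -> x <= y + e) -> x <= y.
Proof.
  intros H. destruct (Rle_dec x y) as [h|h]; auto.
  specialize (H ((x - y)/2)). lra.
Qed.

Lemma abs_le_eps_0 (x : R) : (forall e, 0 < e -> Rabs x <= e) -> x = 0.
Proof.
  intros h. assert (Rabs x <= 0) by (apply le_eps; intros e he; rewrite Rplus_0_l; auto).
  generalize (Rle_abs x) (Rle_abs (- x)). rewrite Rabs_Ropp. lra.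
Qed.

Lemma Rsup_lub (E : R -> Prop) : bound E -> (exists x, E x) -> is_lub E (Rsup E).
Proof.
  intros Hb He. destruct (completeness E Hb He) as [m Hm].
  unfold Rsup. apply epsilon_spec. exists m; exact Hm.
Qed.

Lemma Rsup_ge (E : R -> Prop) x : bound E -> E x -> x <= Rsup E.
Proof. intros Hb Hx. apply (Rsup_lub E Hb (ex_intro _ x Hx)). exact Hx. Qed.

Lemma Rsup_le (E : R -> Prop) K : (exists x, E x) -> (forall x, E x -> x <= K) -> Rsup E <= K.
Proof. intros He Hk. apply (Rsup_lub E); auto. exists K; exact Hk. Qed.

Lemma Rsup_approx (E : R -> Prop) e : bound E -> (exists x, E x) -> 0 < e ->
  exists x, E x /\ Rsup E - e < x.
Proof.
  intros Hb He He0. apply NNPP. intros h.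
  assert (Rsup E <= Rsup E - e); [|lra].
  apply (Rsup_lub E Hb He). intros x Hx. apply Rnot_lt_le. intros hx. apply h. eauto.
Qed.

Lemma lim_pinf_unique F l1 l2 : lim_pinf F l1 -> lim_pinf F l2 -> l1 = l2.
Proof.
  intros H1 H2. apply Rminus_diag_uniq, abs_le_eps_0. intros e he.
  destruct (H1 (e/2)) as [M1 h1]; [lra|]. destruct (H2 (e/2)) as [M2 h2]; [lra|].
  set (x := Rmax M1 M2 + 1).
  specialize (h1 x ltac:(unfold x; generalize (Rmax_l M1 M2); lra)).
  specialize (h2 x ltac:(unfold x; generalize (Rmax_r M1 M2); lra)).
  apply Rabs_def2 in h1; apply Rabs_def2 in h2. apply Rabs_le. lra.
Qed.

Lemma lim_minf_pinf F l : lim_minf F l <-> lim_pinf (fun x => F (- x)) l.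
Proof.
  split; intros H e he; destruct (H e he) as [M h].
  - exists (- M). intros x hx. apply h. lra.
  - exists (- M). intros x hx. replace x with (- - x) by ring. apply h. lra.
Qed.

Lemma val_pinf_eq F l : lim_pinf F l -> val_pinf F = l.
Proof.
  intros H. unfold val_pinf. apply (lim_pinf_unique F); auto. apply epsilon_spec. exists l; auto.
Qed.

Lemma val_minf_eq F l : lim_minf F l -> val_minf F = l.
Proof.
  intros H. unfold val_minf. apply (lim_pinf_unique (fun x => F (- x))); apply lim_minf_pinf; auto.
  apply epsilon_spec. exists l; auto.
Qed.

Lemma lin_bound α β x y e : Rabs x <= e -> Rabs y <= e ->
  Rabs (α * x + β * y) <= (Rabs α + Rabs β) * e.
Proof.
  intros hx hy. eapply Rle_trans. apply Rabs_triang. rewrite !Rabs_mult.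
  assert (Rabs α * Rabs x <= Rabs α * e) by (apply Rmult_le_compat_l; auto; apply Rabs_pos).
  assert (Rabs β * Rabs y <= Rabs β * e) by (apply Rmult_le_compat_l; auto; apply Rabs_pos).
  lra.
Qed.

Lemma lin_tolerance α β e : 0 < e ->
  0 < e / (Rabs α + Rabs β + 1) /\ (Rabs α + Rabs β) * (e / (Rabs α + Rabs β + 1)) < e.
Proof.
  intros he. assert (hc : 0 < Rabs α + Rabs β + 1) by (generalize (Rabs_pos α) (Rabs_pos β); lra).
  split; [apply Rdiv_lt_0_compat; auto|].
  apply Rmult_lt_reg_r with (Rabs α + Rabs β + 1); auto.
  replace ((Rabs α + Rabs β) * (e / (Rabs α + Rabs β + 1)) * (Rabs α + Rabs β + 1)) with
    ((Rabs α + Rabs β) * e) by (field; lra). nra.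
Qed.

Lemma lim_pinf_lin F1 F2 l1 l2 a b : lim_pinf F1 l1 -> lim_pinf F2 l2 ->
  lim_pinf (fun y => a * F1 y + b * F2 y) (a * l1 + b * l2).
Proof.
  intros H1 H2 e he. destruct (lin_tolerance a b e he) as [he' hsmall].
  destruct (H1 _ he') as [M1 h1]; destruct (H2 _ he') as [M2 h2].
  exists (Rmax M1 M2). intros x hx.
  specialize (h1 x ltac:(generalize (Rmax_l M1 M2); lra)).
  specialize (h2 x ltac:(generalize (Rmax_r M1 M2); lra)).
  replace (a * F1 x + b * F2 x - (a * l1 + b * l2)) with (a * (F1 x - l1) + b * (F2 x - l2)) by ring.
  eapply Rle_lt_trans; [apply lin_bound; left; eauto|]. auto.
Qed.

Lemma INR_eventually_gt (B : R) : exists N, forall n, (N <= n)%nat -> B < INR n.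
Proof.
  destruct (INR_unbounded B) as [N hN]. exists N. intros n hn. apply le_INR in hn. lra.
Qed.

Lemma cauchy_pinf f : (forall e, 0 < e -> exists B, forall x y, B < x -> B < y -> Rabs (f x - f y) < e) ->
  exists l, lim_pinf f l.
Proof.
  intros H.
  assert (Hc : Cauchy_crit (fun n => f (INR n))).
  { intros e he. destruct (H e he) as [B hB]. destruct (INR_eventually_gt B) as [N hN].
    exists N. intros n m hn hm. apply hB; auto. }
  destruct (R_complete _ Hc) as [l Hl]. exists l.
  intros e he. destruct (H (e/2)) as [B hB]; [lra|]. exists B. intros x hx.
  destruct (Hl (e/2)) as [N1 hN1]; [lra|]. destruct (INR_eventually_gt B) as [N2 hN2].
  set (n := max N1 N2).
  specialize (hN1 n (Nat.le_max_l _ _)). unfold R_dist in hN1.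
  specialize (hB x (INR n) hx (hN2 n (Nat.le_max_r _ _))).
  replace (f x - l) with ((f x - f (INR n)) + (f (INR n) - l)) by ring.
  eapply Rle_lt_trans. apply Rabs_triang. lra.
Qed.

Lemma cauchy_minf f : (forall e, 0 < e -> exists B, forall x y, x < B -> y < B -> Rabs (f x - f y) < e) ->
  exists l, lim_minf f l.
Proof.
  intros H. destruct (cauchy_pinf (fun x => f (- x))) as [l hl].
  - intros e he. destruct (H e he) as [B hB]. exists (- B). intros. apply hB; lra.
  - exists l. apply lim_minf_pinf. exact hl.
Qed.

Lemma rsum_ext n f g : (forall i, (i < n)%nat -> f i = g i) -> rsum n f = rsum n g.
Proof.
  induction n; simpl; intros; auto. rewrite IHn; [rewrite H; auto|]. intros; apply H; lia.
Qed.

Lemma rsum_shift n f : rsum (S n) f = f 0%nat + rsum n (fun i => f (S i)).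
Proof.
  induction n. simpl; ring. change (rsum (S (S n)) f) with (rsum (S n) f + f (S n)).
  rewrite IHn. simpl. ring.
Qed.

Lemma rsum_app n m f : rsum (n + m) f = rsum n f + rsum m (fun i => f (n + i)%nat).
Proof.
  induction m. simpl. rewrite Nat.add_0_r; ring.
  rewrite Nat.add_succ_r. simpl. rewrite IHm. ring.
Qed.

Lemma rsum_lin n f g a b : rsum n (fun i => a * f i + b * g i) = a * rsum n f + b * rsum n g.
Proof. induction n; simpl. ring. rewrite IHn; ring. Qed.

Lemma rsum_tele n u : rsum n (fun i => u (S i) - u i) = u n - u 0%nat.
Proof. induction n; simpl. ring. rewrite IHn; ring. Qed.

Lemma rsum_zero n f : (forall i, (i < n)%nat -> f i = 0) -> rsum n f = 0.
Proof. induction n; simpl; intros; auto. rewrite IHn, H; try lia; try ring. intros; apply H; lia. Qed.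

(** ** Riemann--Stieltjes sums over tagged partitions *)

Definition RS (H g : R -> R) n (p t : nat -> R) :=
  rsum n (fun i => H (t i) * (g (p (S i)) - g (p i))).

Definition gauge_fine (d : R -> R) a b n (p t : nat -> R) :=
  p 0%nat = a /\ p n = b /\ (forall i, (i < n)%nat ->
        p i <= t i <= p (S i) /\
        t i - d (t i) < p i /\ p (S i) < t i + d (t i)).

(** A partition of  [a,b]  fine for the constant gauge  δ  (tags need not lie
    in their subintervals). *)
Definition dfine (δ a b : R) n (p t : nat -> R) :=
  p 0%nat = a /\ p n = b /\ (forall i, (i < n)%nat ->
        p i <= p (S i) /\ t i - δ < p i /\ p (S i) < t i + δ).

Lemma gauge_fine_dfine d δ a b n p t : (forall x, d x <= δ) -> gauge_fine d a b n p t -> dfine δ a b n p t.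
Proof.
  intros hd [h0 [h1 h2]]. split; auto. split; auto. intros i hi.
  destruct (h2 i hi) as [[u v] [w z]]. specialize (hd (t i)). repeat split; lra.
Qed.

Lemma dfine_mono δ δ' a b n p t : δ <= δ' -> dfine δ a b n p t -> dfine δ' a b n p t.
Proof.
  intros hδ [x0 [x1 x2]]. split; auto. split; auto. intros i hi.
  destruct (x2 i hi) as [y1 [y2 y3]]. repeat split; lra.
Qed.

Lemma gauge_fine_extend d a x y c n p t : gauge_fine d a x n p t ->
  x <= c <= y -> c - d c < x -> y < c + d c -> exists n p t, gauge_fine d a y n p t.
Proof.
  intros [hp0 [hpn hf]] hc hx hy.
  exists (S n), (fun i => if Nat.leb i n then p i else y), (fun i => if Nat.ltb i n then t i else c).
  split; [simpl; auto|]. split.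
  - replace (Nat.leb (S n) n) with false; auto. symmetry; apply Nat.leb_gt; lia.
  - intros i hi. destruct (Nat.ltb_spec i n).
    + replace (Nat.leb i n) with true by (symmetry; apply Nat.leb_le; lia).
      replace (Nat.leb (S i) n) with true by (symmetry; apply Nat.leb_le; lia).
      apply hf; auto.
    + assert (i = n) by lia. subst i.
      rewrite Nat.leb_refl. replace (Nat.leb (S n) n) with false by (symmetry; apply Nat.leb_gt; lia).
      rewrite hpn. lra.
Qed.

(** Cousin's lemma: every positive gauge on  [a,b]  admits a fine partition.
    Take the supremum  c  of the  x  for which  [a,x]  has one; extending
    across  c  shows  c = b  and that  b  itself is reached. *)
Lemma cousin d a b : a <= b -> (forall t, a <= t <= b -> 0 < d t) ->
  exists n p t, gauge_fine d a b n p t.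
Proof.
  intros hab hd.
  set (E := fun x => a <= x <= b /\ exists n p t, gauge_fine d a x n p t).
  assert (Ea : E a).
  { split; [lra|]. exists 0%nat, (fun _ => a), (fun _ => a). split; auto. split; auto. intros; lia. }
  assert (Eb : bound E). { exists b. intros x [hx _]. lra. }
  destruct (completeness E Eb (ex_intro _ a Ea)) as [c [hc1 hc2]].
  assert (hac : a <= c) by (apply hc1; auto).
  assert (hcb : c <= b) by (apply hc2; intros x [hx _]; lra).
  assert (hdc : 0 < d c) by (apply hd; lra).
  assert (Hx : exists x, E x /\ c - d c < x).
  { apply NNPP. intros h. assert (c <= c - d c); [|lra].
    apply hc2. intros x hx. apply Rnot_lt_le. intros hlt. apply h. eauto. }
  destruct Hx as [x [[hx hfine] hxc]].
  assert (hxc' : x <= c) by (apply hc1; split; auto).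
  set (y := Rmin b (c + d c / 2)).
  assert (hy1 : c <= y) by (unfold y; apply Rmin_glb; lra).
  assert (hy3 : y < c + d c) by (unfold y; generalize (Rmin_r b (c + d c / 2)); lra).
  destruct hfine as [n [p [t hP]]].
  assert (Ey : E y).
  { split; [generalize (Rmin_l b (c + d c / 2)); fold y; lra|].
    apply (gauge_fine_extend d a x y c n p t); auto; lra. }
  assert (hyb : y = b).
  { assert (y <= c) by (apply hc1; auto).
    unfold y in *. destruct (Rle_dec b (c + d c / 2)).
    - rewrite Rmin_left; auto.
    - rewrite Rmin_right in H; lra. }
  rewrite hyb in Ey. destruct Ey as [_ h]; exact h.
Qed.

Lemma nondecr_bounds n (p : nat -> R) : (forall i, (i < n)%nat -> p i <= p (S i)) ->
  forall i, (i <= n)%nat -> p 0%nat <= p i <= p n.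
Proof.
  intros hm. assert (A: forall i, (i <= n)%nat -> p 0%nat <= p i).
  { induction i; intros; [lra|]. specialize (IHi ltac:(lia)). specialize (hm i ltac:(lia)). lra. }
  assert (B: forall k, (k <= n)%nat -> p (n - k)%nat <= p n).
  { induction k; intros. replace (n-0)%nat with n by lia; lra.
    specialize (IHk ltac:(lia)). specialize (hm (n - S k)%nat ltac:(lia)).
    replace (S (n - S k)) with (n - k)%nat in hm by lia. lra. }
  intros i hi. split; auto. replace i with (n - (n - i))%nat by lia. apply B; lia.
Qed.

Lemma dfine_bounds δ a b n p t : dfine δ a b n p t -> forall i, (i <= n)%nat -> a <= p i <= b.
Proof.
  intros [h0 [h1 h2]] i hi. rewrite <- h0, <- h1. apply nondecr_bounds; auto.
  intros j hj; apply h2; auto.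
Qed.

Lemma dfine_le δ a b n p t : dfine δ a b n p t -> a <= b.
Proof. intros hc. generalize (dfine_bounds _ _ _ _ _ _ hc 0%nat ltac:(lia)). lra. Qed.

Lemma dfine_shift δ a b n p t : dfine δ a b (S n) p t ->
  dfine δ (p 1%nat) b n (fun i => p (S i)) (fun i => t (S i)).
Proof.
  intros [h0 [h1 h2]]. split; auto. split; auto. intros i hi. apply h2; lia.
Qed.

Lemma RS_shift H g n p t : RS H g (S n) p t =
  H (t 0%nat) * (g (p 1%nat) - g (p 0%nat)) + RS H g n (fun i => p (S i)) (fun i => t (S i)).
Proof. unfold RS. rewrite rsum_shift. reflexivity. Qed.

Lemma RS_degenerate δ a n p t H g : dfine δ a a n p t -> RS H g n p t = 0.
Proof.
  intros hc. unfold RS. apply rsum_zero. intros i hi.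
  assert (h1 := dfine_bounds _ _ _ _ _ _ hc i ltac:(lia)).
  assert (h2 := dfine_bounds _ _ _ _ _ _ hc (S i) ltac:(lia)).
  replace (p (S i)) with (p i) by lra. ring.
Qed.

Definition cat_points n (p q : nat -> R) i := if Nat.leb i n then p i else q (i - n)%nat.
Definition cat_tags n (t s : nat -> R) i := if Nat.ltb i n then t i else s (i - n)%nat.

Lemma cat_points_l n p q i : (i <= n)%nat -> cat_points n p q i = p i.
Proof. intros h. unfold cat_points. replace (Nat.leb i n) with true; auto. symmetry; apply Nat.leb_le; auto. Qed.

Lemma cat_points_r n (p q : nat -> R) j : p n = q 0%nat -> cat_points n p q (n + j) = q j.
Proof.
  intros h. unfold cat_points. destruct j.
  - rewrite Nat.add_0_r, Nat.leb_refl. auto.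
  - replace (Nat.leb (n + S j) n) with false by (symmetry; apply Nat.leb_gt; lia).
    f_equal; lia.
Qed.

Lemma cat_tags_l n t s i : (i < n)%nat -> cat_tags n t s i = t i.
Proof. intros h. unfold cat_tags. replace (Nat.ltb i n) with true; auto. symmetry; apply Nat.ltb_lt; auto. Qed.

Lemma cat_tags_r n (t s : nat -> R) j : cat_tags n t s (n + j) = s j.
Proof.
  unfold cat_tags. replace (Nat.ltb (n + j) n) with false by (symmetry; apply Nat.ltb_ge; lia).
  f_equal; lia.
Qed.

Lemma dfine_cat (H g : R -> R) δ a b c n m p t q s : dfine δ a b n p t -> dfine δ b c m q s ->
  dfine δ a c (n + m) (cat_points n p q) (cat_tags n t s) /\
  RS H g (n + m) (cat_points n p q) (cat_tags n t s) = RS H g n p t + RS H g m q s.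
Proof.
  intros [p0 [pn hp]] [q0 [qm hq]].
  assert (hpq : p n = q 0%nat) by congruence.
  split; [split; [|split]|].
  - rewrite cat_points_l; auto; lia.
  - rewrite cat_points_r; auto.
  - intros i hi. destruct (Nat.lt_ge_cases i n).
    + rewrite !cat_points_l, cat_tags_l; try lia. apply hp; auto.
    + replace i with (n + (i - n))%nat by lia. rewrite cat_tags_r.
      replace (S (n + (i - n))) with (n + S (i - n))%nat by lia. rewrite !cat_points_r; auto. apply hq; lia.
  - unfold RS. rewrite rsum_app. f_equal.
    + apply rsum_ext. intros i hi. rewrite !cat_points_l, cat_tags_l; auto; lia.
    + apply rsum_ext. intros i hi. rewrite cat_tags_r.
      replace (S (n + i)) with (n + S i)%nat by lia. rewrite !cat_points_r; auto.
Qed.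

Definition grid a b N (i : nat) := a + INR i * ((b - a) / INR (S N)).

Lemma grid_dfine δ a b N : a <= b -> 0 < δ -> (b - a) / INR (S N) < δ ->
  dfine δ a b (S N) (grid a b N) (grid a b N).
Proof.
  intros hab hd hN. assert (hS : 0 < INR (S N)) by (apply lt_0_INR; lia).
  assert (hq : 0 <= (b - a) / INR (S N)) by (unfold Rdiv; apply Rmult_le_pos; [lra|left; apply Rinv_0_lt_compat; lra]).
  split; [unfold grid; simpl; ring|]. split.
  - unfold grid. field. lra.
  - intros i hi. unfold grid. set (q := (b - a) / INR (S N)) in *. rewrite S_INR.
    replace (a + (INR i + 1) * q) with (a + INR i * q + q) by ring. repeat split; lra.
Qed.

Lemma grid_mesh a b δ : 0 < δ -> exists N, forall k, (N <= k)%nat -> (b - a) / INR (S k) < δ.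
Proof.
  intros hd. destruct (INR_unbounded (Rabs (b - a) / δ)) as [N hN].
  exists N. intros k hk. assert (hS : 0 < INR (S k)) by (apply lt_0_INR; lia).
  apply le_INR in hk. rewrite S_INR in hS |- *.
  apply Rmult_lt_reg_r with (INR k + 1); [lra|]. unfold Rdiv. rewrite Rmult_assoc, Rinv_l; [|lra].
  assert (Rabs (b - a) < δ * (INR k + 1)).
  { apply Rmult_lt_reg_r with (/ δ). apply Rinv_0_lt_compat; lra.
    rewrite Rmult_comm with (r1 := δ), Rmult_assoc, Rinv_r; [|lra]. unfold Rdiv in hN. nra. }
  generalize (Rle_abs (b - a)). lra.
Qed.

Lemma dfine_exists a b δ : a <= b -> 0 < δ -> exists n p t, dfine δ a b n p t.
Proof.
  intros hab hd. destruct (grid_mesh a b δ hd) as [N hN]. exists (S N), (grid a b N), (grid a b N).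
  apply grid_dfine; auto.
Qed.

Definition var_majorant (v g : R -> R) :=
  (forall x y, x <= y -> v x <= v y) /\ (forall x y, x <= y -> Rabs (g y - g x) <= v y - v x).

(** Inductive step of [RS_compare]: when the first partition has the smaller
    first subinterval, replace the first point of the second partition and
    compare the tails. *)
Lemma RS_compare_step H g v δ ε N :
  var_majorant v g -> (forall x y, Rabs (x - y) < 2*δ -> Rabs (H x - H y) <= ε) ->
  (forall n m a b p t q s, (n + m <= N)%nat -> dfine δ a b n p t -> dfine δ a b m q s ->
      Rabs (RS H g n p t - RS H g m q s) <= ε * (v b - v a)) ->
  forall n m a b p t q s, (S n + S m <= S N)%nat -> dfine δ a b (S n) p t -> dfine δ a b (S m) q s ->
    p 1%nat <= q 1%nat ->
      Rabs (RS H g (S n) p t - RS H g (S m) q s) <= ε * (v b - v a).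
Proof.
  intros [vm vg] hH IH n m a b p t q s hnm hP hQ hpq.
  pose (q' := fun i => match i with 0%nat => p 1%nat | S k => q (S k) end).
  assert (hQ' : dfine δ (p 1%nat) b (S m) q' s).
  { destruct hQ as [h0 [h1 h2]]. split; auto. split; auto. intros i hi.
    destruct i.
    - simpl. destruct (h2 0%nat hi) as [u [w z]]. rewrite h0 in w. destruct hP as [k0 [k1 k2]].
      destruct (k2 0%nat ltac:(lia)) as [u' _]. rewrite k0 in u'. repeat split; lra.
    - apply h2; auto. }
  specialize (IH n (S m) (p 1%nat) b _ _ q' s ltac:(lia) (dfine_shift _ _ _ _ _ _ hP) hQ').
  rewrite RS_shift, (RS_shift H g m q s).
  assert (E : RS H g (S m) q' s = H (s 0%nat) * (g (q 1%nat) - g (p 1%nat)) + RS H g m (fun i => q (S i)) (fun i => s (S i))).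
  { rewrite RS_shift. reflexivity. }
  assert (hp1b := dfine_bounds _ _ _ _ _ _ hP 1%nat ltac:(lia)).
  destruct hP as [k0 [k1 k2]]. destruct hQ as [h0 [h1 h2]].
  destruct (k2 0%nat ltac:(lia)) as [u1 [u2 u3]]. destruct (h2 0%nat ltac:(lia)) as [w1 [w2 w3]].
  rewrite k0 in *. rewrite h0 in *.
  assert (hts : Rabs (t 0%nat - s 0%nat) < 2 * δ) by (apply Rabs_def1; lra).
  specialize (hH _ _ hts).
  assert (hg := vg a (p 1%nat) u1).
  replace (H (t 0%nat) * (g (p 1%nat) - g a) + RS H g n (fun i => p (S i)) (fun i => t (S i)) -
     (H (s 0%nat) * (g (q 1%nat) - g a) + RS H g m (fun i => q (S i)) (fun i => s (S i))))
   with ((H (t 0%nat) - H (s 0%nat)) * (g (p 1%nat) - g a) +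
         (RS H g n (fun i => p (S i)) (fun i => t (S i)) - RS H g (S m) q' s)) by (rewrite E; ring).
  eapply Rle_trans. apply Rabs_triang. rewrite Rabs_mult.
  assert (Rabs (H (t 0%nat) - H (s 0%nat)) * Rabs (g (p 1%nat) - g a) <= ε * (v (p 1%nat) - v a)).
  { apply Rmult_le_compat; auto; apply Rabs_pos. }
  lra.
Qed.

Lemma RS_compare H g v δ ε :
  var_majorant v g -> (forall x y, Rabs (x - y) < 2*δ -> Rabs (H x - H y) <= ε) ->
  forall n m a b p t q s, dfine δ a b n p t -> dfine δ a b m q s ->
      Rabs (RS H g n p t - RS H g m q s) <= ε * (v b - v a).
Proof.
  intros hv hH.
  assert (main : forall N n m a b p t q s, (n + m <= N)%nat -> dfine δ a b n p t -> dfine δ a b m q s ->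
      Rabs (RS H g n p t - RS H g m q s) <= ε * (v b - v a)).
  { induction N; intros n m a b p t q s hnm hP hQ.
    - assert (n = 0%nat) by lia. assert (m = 0%nat) by lia. subst.
      destruct hP as [h0 [h1 _]]. unfold RS; simpl. rewrite Rminus_0_r, Rabs_R0. replace b with a by congruence. lra.
    - destruct n as [|n]; [|destruct m as [|m]].
      + assert (a = b) by (destruct hP as [h0 [h1 _]]; congruence). subst b.
        rewrite (RS_degenerate _ _ _ _ _ _ _ hP), (RS_degenerate _ _ _ _ _ _ _ hQ).
        rewrite Rminus_0_r, Rabs_R0. lra.
      + assert (a = b) by (destruct hQ as [h0 [h1 _]]; rewrite <- h0, <- h1; reflexivity). subst b.
        rewrite (RS_degenerate _ _ _ _ _ _ _ hP). replace (RS H g 0 q s) with 0 by reflexivity.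
        rewrite Rminus_0_r, Rabs_R0. lra.
      + destruct (Rle_dec (p 1%nat) (q 1%nat)).
        * eapply RS_compare_step; eauto.
        * rewrite Rabs_minus_sym. apply (RS_compare_step H g v δ ε N hv hH IHN m n a b q s p t); auto; try lia; lra. }
  intros. eapply main; eauto.
Qed.

Lemma term_bound (H g v : R -> R) (x y t K : R) : var_majorant v g -> x <= y -> Rabs (H t) <= K ->
  Rabs (H t * (g y - g x)) <= K * (v y - v x).
Proof.
  intros [vm vg] hxy hK. rewrite Rabs_mult. apply Rmult_le_compat; auto; try apply Rabs_pos.
Qed.

(** Tail estimate: if  |H| <= K  everywhere and  |H| <= ε  left of  c, a
    δ-fine sum over  [a,b]  is at most  ε (v b - v a) + (K - ε)(v b - v d),
    where  d  is any point left of  max a (c - δ)  (beyond which tags may exceed  c). *)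
Lemma RS_bound_left H g v δ ε K c : var_majorant v g -> ε <= K ->
  (forall t, t <= c -> Rabs (H t) <= ε) -> (forall t, Rabs (H t) <= K) ->
  forall n a b p t, dfine δ a b n p t -> forall d, d <= b -> d <= Rmax a (c - δ) ->
   Rabs (RS H g n p t) <= ε * (v b - v a) + (K - ε) * (v b - v d).
Proof.
  intros hv heK hs hK. induction n; intros a b p t hc d hdb hd.
  - assert (a = b) by (destruct hc as [h0 [h1 _]]; congruence). subst b.
    unfold RS; simpl. rewrite Rabs_R0. destruct hv as [vm _]. specialize (vm d a hdb).
    assert (0 <= (K - ε) * (v a - v d)) by (apply Rmult_le_pos; lra). lra.
  - rewrite RS_shift. assert (hc' := dfine_shift _ _ _ _ _ _ hc).
    assert (hp1 := dfine_bounds _ _ _ _ _ _ hc 1%nat ltac:(lia)).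
    destruct hc as [h0 [h1 h2]]. destruct (h2 0%nat ltac:(lia)) as [u1 [u2 u3]]. rewrite h0 in *.
    destruct (Rle_dec (t 0%nat) c) as [htc|htc].
    + assert (T := term_bound H g v a (p 1%nat) (t 0%nat) ε hv u1 (hs _ htc)).
      assert (hd' : d <= Rmax (p 1%nat) (c - δ)).
      { revert hd. unfold Rmax. destruct (Rle_dec a (c - δ)); destruct (Rle_dec (p 1%nat) (c - δ)); lra. }
      specialize (IHn _ _ _ _ hc' d hdb hd').
      eapply Rle_trans. apply Rabs_triang. lra.
    + assert (T := term_bound H g v a (p 1%nat) (t 0%nat) K hv u1 (hK _)).
      assert (hda : d <= a).
      { revert hd. unfold Rmax. destruct (Rle_dec a (c - δ)); lra. }
      specialize (IHn _ _ _ _ hc' (p 1%nat) ltac:(lra) ltac:(apply Rmax_l)).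
      destruct hv as [vm _]. specialize (vm _ _ hda).
      assert ((K - ε) * (v b - v a) <= (K - ε) * (v b - v d)) by (apply Rmult_le_compat_l; lra).
      eapply Rle_trans. apply Rabs_triang. nra.
Qed.

Lemma RS_bound_right H g v δ ε K c : var_majorant v g -> ε <= K ->
  (forall t, c <= t -> Rabs (H t) <= ε) -> (forall t, Rabs (H t) <= K) ->
  forall n a b p t, dfine δ a b n p t -> forall d, a <= d -> Rmin b (c + δ) <= d ->
   Rabs (RS H g n p t) <= ε * (v b - v a) + (K - ε) * (v d - v a).
Proof.
  intros hv heK hs hK. induction n; intros a b p t hc d hdb hd.
  - assert (a = b) by (destruct hc as [h0 [h1 _]]; congruence). subst b.
    unfold RS; simpl. rewrite Rabs_R0. destruct hv as [vm _]. specialize (vm a d hdb).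
    assert (0 <= (K - ε) * (v d - v a)) by (apply Rmult_le_pos; lra). lra.
  - rewrite RS_shift. assert (hc' := dfine_shift _ _ _ _ _ _ hc).
    assert (hp1 := dfine_bounds _ _ _ _ _ _ hc 1%nat ltac:(lia)).
    destruct hc as [h0 [h1 h2]]. destruct (h2 0%nat ltac:(lia)) as [u1 [u2 u3]]. rewrite h0 in *.
    destruct hv as [vm vg].
    destruct (Rle_dec c (t 0%nat)) as [htc|htc].
    + assert (T := term_bound H g v a (p 1%nat) (t 0%nat) ε (conj vm vg) u1 (hs _ htc)).
      specialize (IHn _ _ _ _ hc' (Rmax d (p 1%nat)) ltac:(apply Rmax_r)
         ltac:(generalize (Rmax_l d (p 1%nat)); lra)).
      assert ((K - ε) * (v (Rmax d (p 1%nat)) - v (p 1%nat)) <= (K - ε) * (v d - v a)).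
      { apply Rmult_le_compat_l; [lra|]. unfold Rmax. destruct (Rle_dec d (p 1%nat)).
        - rewrite Rminus_diag. generalize (vm _ _ hdb); lra.
        - generalize (vm _ _ u1); lra. }
      eapply Rle_trans. apply Rabs_triang. lra.
    + assert (T := term_bound H g v a (p 1%nat) (t 0%nat) K (conj vm vg) u1 (hK _)).
      assert (hpd : p 1%nat <= d).
      { assert (p 1%nat <= Rmin b (c + δ)) by (apply Rmin_glb; lra). lra. }
      specialize (IHn _ _ _ _ hc' d hpd hd).
      eapply Rle_trans. apply Rabs_triang. nra.
Qed.

Lemma RS_bound H g v δ K : var_majorant v g -> (forall t, Rabs (H t) <= K) ->
  forall n a b p t, dfine δ a b n p t -> Rabs (RS H g n p t) <= K * (v b - v a).
Proof.
  intros hv hK n a b p t hc.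
  assert (h := RS_bound_left H g v δ K K (b + δ) hv (Rle_refl _) (fun t _ => hK t) hK n a b p t hc b (Rle_refl _)).
  assert (hab := dfine_le _ _ _ _ _ _ hc).
  rewrite Rminus_diag, Rmult_0_l, Rplus_0_r in h. apply h.
  unfold Rmax; destruct (Rle_dec a (b + δ - δ)); lra.
Qed.

(** ** The integral over a compact interval *)

Definition unif_cont (H : R -> R) := forall e, 0 < e -> exists η, 0 < η /\
  forall x y, Rabs (x - y) < η -> Rabs (H x - H y) <= e.

Lemma unif_cont_half H : unif_cont H -> forall e, 0 < e -> exists δ, 0 < δ /\
  forall x y, Rabs (x - y) < 2 * δ -> Rabs (H x - H y) <= e.
Proof.
  intros hU e he. destruct (hU e he) as [η [hη h]]. exists (η / 2). split; [lra|].
  intros x y hxy. apply h. lra.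
Qed.

Definition RS_limit H g a b J := forall e, 0 < e -> exists δ, 0 < δ /\
  forall n p t, dfine δ a b n p t -> Rabs (RS H g n p t - J) <= e.

(** For uniformly continuous  H, the grid sums are Cauchy by [RS_compare];
    their limit is the limit of all  δ-fine sums. *)
Lemma RS_limit_exists H g v a b : unif_cont H -> var_majorant v g -> a <= b -> exists J, RS_limit H g a b J.
Proof.
  intros hU hv hab.
  set (u := fun k => RS H g (S k) (grid a b k) (grid a b k)).
  assert (hvab : v a <= v b) by (apply hv; auto).
  assert (key : forall e, 0 < e -> exists δ N, 0 < δ /\ (forall k, (N <= k)%nat -> dfine δ a b (S k) (grid a b k) (grid a b k)) /\
     forall n m p t q s, dfine δ a b n p t -> dfine δ a b m q s -> Rabs (RS H g n p t - RS H g m q s) <= e / 2).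
  { intros e he. set (e' := e / 2 / (v b - v a + 1)).
    assert (he' : 0 < e') by (unfold e'; apply Rdiv_lt_0_compat; lra).
    destruct (unif_cont_half H hU e' he') as [δ [hδ hH]].
    destruct (grid_mesh a b δ hδ) as [N hN]. exists δ, N. split; auto. split.
    - intros k hk. apply grid_dfine; auto.
    - intros n m p t q s hP hQ. eapply Rle_trans. apply (RS_compare H g v δ e' hv hH _ _ _ _ _ _ _ _ hP hQ).
      assert (e' * (v b - v a + 1) = e / 2) by (unfold e'; field; lra). nra. }
  assert (Hc : Cauchy_crit u).
  { intros e he. destruct (key e he) as [δ [N [hδ [hN hC]]]]. exists N. intros n m hn hm.
    unfold R_dist, u. eapply Rle_lt_trans. apply hC; apply hN; auto. lra. }
  destruct (R_complete u Hc) as [J hJ]. exists J.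
  intros e he. destruct (key e he) as [δ [N [hδ [hN hC]]]]. exists δ. split; auto.
  intros n p t hP. apply le_eps. intros e2 he2.
  destruct (hJ e2 he2) as [N2 hN2]. specialize (hN2 (max N N2) (Nat.le_max_r _ _)). unfold R_dist in hN2.
  assert (h1 := hC _ _ _ _ _ _ hP (hN (max N N2) (Nat.le_max_l _ _))). fold (u (max N N2)) in h1.
  replace (RS H g n p t - J) with ((RS H g n p t - u (max N N2)) + (u (max N N2) - J)) by ring.
  eapply Rle_trans. apply Rabs_triang. lra.
Qed.

Lemma RS_limit_HS H g a b J : RS_limit H g a b J -> HS_integral_ab H g a b J.
Proof.
  intros hJ eps heps. destruct (hJ (eps/2) ltac:(lra)) as [δ [hδ h]].
  exists (fun _ => δ). split; [intros; auto|].
  intros n p t h0 h1 h2. eapply Rle_lt_trans; [apply h|lra].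
  apply (gauge_fine_dfine (fun _ => δ)); [intros; lra|]. split; auto.
Qed.

(** The Henstock--Stieltjes integral over  [a,b]  is unique (Cousin's lemma). *)
Lemma HS_ab_unique H g a b I1 I2 : a <= b -> HS_integral_ab H g a b I1 -> HS_integral_ab H g a b I2 -> I1 = I2.
Proof.
  intros hab h1 h2. apply Rminus_diag_uniq, abs_le_eps_0. intros e he.
  destruct (h1 (e/2) ltac:(lra)) as [d1 [hd1 k1]]. destruct (h2 (e/2) ltac:(lra)) as [d2 [hd2 k2]].
  destruct (cousin (fun x => Rmin (d1 x) (d2 x)) a b hab) as [n [p [t [f0 [f1 f2]]]]].
  { intros x hx. apply Rmin_glb_lt; auto. }
  specialize (k1 n p t f0 f1). specialize (k2 n p t f0 f1).
  assert (A : Rabs (RS H g n p t - I1) < e/2).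
  { apply k1. intros i hi. destruct (f2 i hi) as [[u w] [y z]].
    generalize (Rmin_l (d1 (t i)) (d2 (t i))). intros. repeat split; lra. }
  assert (B : Rabs (RS H g n p t - I2) < e/2).
  { apply k2. intros i hi. destruct (f2 i hi) as [[u w] [y z]].
    generalize (Rmin_r (d1 (t i)) (d2 (t i))). intros. repeat split; lra. }
  replace (I1 - I2) with (- (RS H g n p t - I1) + (RS H g n p t - I2)) by ring.
  eapply Rle_trans. apply Rabs_triang. rewrite Rabs_Ropp. lra.
Qed.

Lemma RS_limit_bound H g a b J B : RS_limit H g a b J -> a <= b ->
  (forall δ, 0 < δ -> δ <= 1 -> forall n p t, dfine δ a b n p t -> Rabs (RS H g n p t) <= B) -> Rabs J <= B.
Proof.
  intros hJ hab hB. apply le_eps. intros e he.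
  destruct (hJ e he) as [δ [hδ h]].
  set (δ' := Rmin δ 1).
  assert (hδ' : 0 < δ') by (apply Rmin_glb_lt; lra).
  destruct (dfine_exists a b δ' hab hδ') as [n [p [t hc]]].
  specialize (h _ _ _ (dfine_mono δ' δ _ _ _ _ _ (Rmin_l δ 1) hc)).
  specialize (hB δ' hδ' (Rmin_r _ _) _ _ _ hc).
  replace J with (RS H g n p t - (RS H g n p t - J)) by ring.
  eapply Rle_trans. apply Rabs_triang. rewrite Rabs_Ropp. lra.
Qed.

Lemma RS_limit_add H g a b c J1 J2 J3 : a <= b -> b <= c ->
  RS_limit H g a b J1 -> RS_limit H g b c J2 -> RS_limit H g a c J3 -> J3 = J1 + J2.
Proof.
  intros hab hbc h1 h2 h3. apply Rminus_diag_uniq, abs_le_eps_0. intros e he.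
  destruct (h1 (e/3) ltac:(lra)) as [d1 [hd1 k1]].
  destruct (h2 (e/3) ltac:(lra)) as [d2 [hd2 k2]].
  destruct (h3 (e/3) ltac:(lra)) as [d3 [hd3 k3]].
  set (δ := Rmin d1 (Rmin d2 d3)).
  assert (hδ : 0 < δ) by (apply Rmin_glb_lt; auto; apply Rmin_glb_lt; auto).
  assert (l1 : δ <= d1) by apply Rmin_l.
  assert (l2 : δ <= d2) by (eapply Rle_trans; [apply Rmin_r|apply Rmin_l]).
  assert (l3 : δ <= d3) by (eapply Rle_trans; [apply Rmin_r|apply Rmin_r]).
  destruct (dfine_exists a b δ hab hδ) as [n [p [t hP]]].
  destruct (dfine_exists b c δ hbc hδ) as [m [q [s hQ]]].
  destruct (dfine_cat H g δ a b c n m p t q s hP hQ) as [hC hE].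
  specialize (k1 _ _ _ (dfine_mono _ _ _ _ _ _ _ l1 hP)).
  specialize (k2 _ _ _ (dfine_mono _ _ _ _ _ _ _ l2 hQ)).
  specialize (k3 _ _ _ (dfine_mono _ _ _ _ _ _ _ l3 hC)).
  rewrite hE in k3.
  replace (J3 - (J1 + J2)) with (- (RS H g n p t + RS H g m q s - J3) + (RS H g n p t - J1) + (RS H g m q s - J2)) by ring.
  eapply Rle_trans. apply Rabs_triang. eapply Rle_trans. apply Rplus_le_compat_r. apply Rabs_triang.
  rewrite Rabs_Ropp. lra.
Qed.

(** ** The integral over the real line *)

Lemma HS_unique H g I1 I2 : HS_integral H g I1 -> HS_integral H g I2 -> I1 = I2.
Proof.
  intros [J1 [hJ1 l1]] [J2 [hJ2 l2]]. apply Rminus_diag_uniq, abs_le_eps_0. intros e he.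
  destruct (l1 (e/2) ltac:(lra)) as [M1 k1]. destruct (l2 (e/2) ltac:(lra)) as [M2 k2].
  set (M := Rabs M1 + Rabs M2 + 1).
  assert (hM1 : M1 < M) by (unfold M; generalize (Rle_abs M1) (Rabs_pos M2); lra).
  assert (hM2 : M2 < M) by (unfold M; generalize (Rle_abs M2) (Rabs_pos M1); lra).
  assert (hM0 : 0 < M) by (unfold M; generalize (Rabs_pos M1) (Rabs_pos M2); lra).
  specialize (k1 (- M - 1) (M + 1) ltac:(lra) ltac:(lra)).
  specialize (k2 (- M - 1) (M + 1) ltac:(lra) ltac:(lra)).
  assert (E : J1 (- M - 1) (M + 1) = J2 (- M - 1) (M + 1)).
  { apply (HS_ab_unique H g (- M - 1) (M + 1)); [lra|apply hJ1; lra|apply hJ2; lra]. }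
  replace (I1 - I2) with (- (J1 (- M - 1) (M + 1) - I1) + (J2 (- M - 1) (M + 1) - I2)) by (rewrite E; ring).
  eapply Rle_trans. apply Rabs_triang. rewrite Rabs_Ropp. lra.
Qed.

Lemma HS_int_eq H g I : HS_integral H g I -> HS_int H g = I.
Proof.
  intros h. apply (HS_unique H g); auto. unfold HS_int. apply epsilon_spec. exists I; auto.
Qed.

Definition range_bounds (v : R -> R) Vs Vi := (forall x, Vi <= v x <= Vs) /\
  (forall η, 0 < η -> exists B, Vs - η < v B) /\ (forall η, 0 < η -> exists A, v A < Vi + η).

(** The integral over  [a,b]  (chosen; meaningful when it exists). *)
Definition RS_int H g a b := epsilon (inhabits 0) (RS_limit H g a b).

Section Line.
Variables (H g v : R -> R) (K Vs Vi : R).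
Hypotheses (hU : unif_cont H) (hK : forall t, Rabs (H t) <= K)
  (hv : var_majorant v g) (hb : range_bounds v Vs Vi).

Lemma RS_int_spec a b : a <= b -> RS_limit H g a b (RS_int H g a b).
Proof.
  intros hab. unfold RS_int. apply epsilon_spec. apply (RS_limit_exists H g v a b hU hv hab).
Qed.

Lemma RS_int_bound a b : a <= b -> Rabs (RS_int H g a b) <= K * (v b - v a).
Proof.
  intros hab. apply (RS_limit_bound H g a b); auto. apply RS_int_spec; auto.
  intros δ hδ _ n p t hc. apply (RS_bound H g v δ K hv hK _ _ _ _ _ hc).
Qed.

Lemma RS_int_widen a' a b b' : a' <= a -> a <= b -> b <= b' ->
  Rabs (RS_int H g a' b' - RS_int H g a b) <= K * (v a - v a') + K * (v b' - v b).
Proof.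
  intros h1 h2 h3.
  rewrite (RS_limit_add H g a' a b' _ _ _ h1 ltac:(lra) (RS_int_spec a' a h1) (RS_int_spec a b' ltac:(lra))
     (RS_int_spec a' b' ltac:(lra))).
  rewrite (RS_limit_add H g a b b' _ _ _ h2 h3 (RS_int_spec a b h2) (RS_int_spec b b' h3)
     (RS_int_spec a b' ltac:(lra))).
  replace (RS_int H g a' a + (RS_int H g a b + RS_int H g b b') - RS_int H g a b)
    with (RS_int H g a' a + RS_int H g b b') by ring.
  eapply Rle_trans. apply Rabs_triang. generalize (RS_int_bound a' a h1) (RS_int_bound b b' h3). lra.
Qed.

Lemma K_nonneg : 0 <= K.
Proof. generalize (hK 0) (Rabs_pos (H 0)). lra. Qed.

(** The integrals over  [a,b]  are Cauchy as  a -> -oo, b -> +oo, because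
    v  approaches its bounds  Vi, Vs  at the two ends. *)
Lemma RS_int_cauchy e : 0 < e -> exists M, 0 < M /\ forall a b a' b', a < - M -> M < b -> a' < - M -> M < b' ->
  Rabs (RS_int H g a b - RS_int H g a' b') <= e.
Proof.
  intros he. set (η := e / (4 * (K + 1))).
  assert (hK0 := K_nonneg).
  assert (hη : 0 < η) by (unfold η; apply Rdiv_lt_0_compat; lra).
  destruct hb as [hvb [hB hA]].
  destruct (hB η hη) as [B hBv]. destruct (hA η hη) as [A hAv].
  set (M := Rabs A + Rabs B + 1).
  exists M. assert (0 < M) by (unfold M; generalize (Rabs_pos A) (Rabs_pos B); lra). split; auto.
  assert (hAM : - M <= A) by (unfold M; generalize (Rle_abs (- A)) (Rabs_pos B); rewrite Rabs_Ropp; lra).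
  assert (hBM : B <= M) by (unfold M; generalize (Rle_abs B) (Rabs_pos A); lra).
  destruct hv as [vm vg].
  assert (nested : forall a b a' b', a' <= a -> a < - M -> M < b -> b <= b' ->
     Rabs (RS_int H g a' b' - RS_int H g a b) <= 2 * K * η).
  { intros a b a' b' h1 h2 h3 h4. eapply Rle_trans. apply RS_int_widen; lra.
    generalize (vm a A ltac:(lra)) (vm B b ltac:(lra)) (hvb a) (hvb a') (hvb b) (hvb b'). intros. nra. }
  intros a b a' b' ha hb' ha' hb''.
  set (m := Rmin a a'). set (m' := Rmax b b').
  assert (k1 := nested a b m m' (Rmin_l _ _) ha hb' (Rmax_l _ _)).
  assert (k2 := nested a' b' m m' (Rmin_r _ _) ha' hb'' (Rmax_r _ _)).
  replace (RS_int H g a b - RS_int H g a' b') with (- (RS_int H g m m' - RS_int H g a b) + (RS_int H g m m' - RS_int H g a' b')) by ring.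
  eapply Rle_trans. apply Rabs_triang. rewrite Rabs_Ropp.
  assert (2 * K * η * 2 <= e).
  { unfold η. apply Rmult_le_reg_r with (4 * (K + 1)); [lra|].
    replace (2 * K * (e / (4 * (K + 1))) * 2 * (4 * (K + 1))) with (4 * K * e) by (field; lra). nra. }
  lra.
Qed.

Definition RS_int_sym n := RS_int H g (- (INR n + 1)) (INR n + 1).

Lemma RS_int_sym_cauchy : Cauchy_crit RS_int_sym.
Proof.
  intros e he. destruct (RS_int_cauchy (e/2) ltac:(lra)) as [M [hM h]].
  destruct (INR_unbounded M) as [N hN]. exists N. intros n m hn hm.
  apply le_INR in hn. apply le_INR in hm. unfold R_dist, RS_int_sym.
  eapply Rle_lt_trans. apply h; lra. lra.
Qed.

Definition RS_int_line := proj1_sig (R_complete RS_int_sym RS_int_sym_cauchy).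

Lemma RS_int_line_lim : Un_cv RS_int_sym RS_int_line.
Proof. unfold RS_int_line. destruct (R_complete RS_int_sym RS_int_sym_cauchy); auto. Qed.

Lemma RS_int_line_HS : HS_integral H g RS_int_line.
Proof.
  exists (RS_int H g). split.
  - intros a b hab. apply RS_limit_HS. apply RS_int_spec. lra.
  - intros e he. destruct (RS_int_cauchy (e/2) ltac:(lra)) as [M [hM h]]. exists M.
    intros a b ha hb'.
    destruct (RS_int_line_lim (e/4) ltac:(lra)) as [N1 hN1].
    destruct (INR_unbounded M) as [N2 hN2].
    set (n := max N1 N2).
    assert (hn : M < INR n + 1).
    { assert (h2 := Nat.le_max_r N1 N2). apply le_INR in h2. fold n in h2. lra. }
    specialize (hN1 n (Nat.le_max_l _ _)). unfold R_dist, RS_int_sym in hN1.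
    specialize (h a b (- (INR n + 1)) (INR n + 1) ha hb' ltac:(lra) hn).
    replace (RS_int H g a b - RS_int_line) with ((RS_int H g a b - RS_int H g (- (INR n + 1)) (INR n + 1)) +
       (RS_int H g (- (INR n + 1)) (INR n + 1) - RS_int_line)) by ring.
    eapply Rle_lt_trans. apply Rabs_triang. lra.
Qed.

Lemma HS_int_line : HS_int H g = RS_int_line.
Proof. apply HS_int_eq. apply RS_int_line_HS. Qed.

Lemma HS_int_bound C :
  (forall a b, a <= b -> forall δ, 0 < δ -> δ <= 1 -> forall n p t, dfine δ a b n p t -> Rabs (RS H g n p t) <= C) ->
  Rabs (HS_int H g) <= C.
Proof.
  intros hC. rewrite HS_int_line.
  assert (hu : forall n, Rabs (RS_int_sym n) <= C).
  { intros n. assert (0 <= INR n) by apply pos_INR. unfold RS_int_sym.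
    apply (RS_limit_bound H g (-(INR n+1)) (INR n+1)); [apply RS_int_spec; lra|lra|].
    apply hC. lra. }
  apply le_eps. intros e he. destruct (RS_int_line_lim e he) as [N hN]. specialize (hN N (le_n _)).
  unfold R_dist in hN. specialize (hu N).
  replace RS_int_line with (RS_int_sym N - (RS_int_sym N - RS_int_line)) by ring.
  eapply Rle_trans. apply Rabs_triang. rewrite Rabs_Ropp. lra.
Qed.

End Line.

Lemma HS_ab_lin H1 g1 H2 g2 H3 g3 α β a b J1 J2 :
  (forall n p t, RS H3 g3 n p t = α * RS H1 g1 n p t + β * RS H2 g2 n p t) ->
  HS_integral_ab H1 g1 a b J1 -> HS_integral_ab H2 g2 a b J2 ->
  HS_integral_ab H3 g3 a b (α * J1 + β * J2).
Proof.
  intros hR hJ1 hJ2 eps heps. destruct (lin_tolerance α β eps heps) as [he' hsmall].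
  destruct (hJ1 _ he') as [d1 [hd1 k1]]. destruct (hJ2 _ he') as [d2 [hd2 k2]].
  exists (fun x => Rmin (d1 x) (d2 x)). split; [intros; apply Rmin_glb_lt; auto|].
  intros n p t h0 h1 h2.
  assert (A : Rabs (RS H1 g1 n p t - J1) < eps / (Rabs α + Rabs β + 1)).
  { apply k1; auto. intros i hi. destruct (h2 i hi) as [[u w] [y z]].
    generalize (Rmin_l (d1 (t i)) (d2 (t i))). intros. repeat split; lra. }
  assert (B : Rabs (RS H2 g2 n p t - J2) < eps / (Rabs α + Rabs β + 1)).
  { apply k2; auto. intros i hi. destruct (h2 i hi) as [[u w] [y z]].
    generalize (Rmin_r (d1 (t i)) (d2 (t i))). intros. repeat split; lra. }
  change (Rabs (RS H3 g3 n p t - (α * J1 + β * J2)) < eps).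
  rewrite hR. replace (α * RS H1 g1 n p t + β * RS H2 g2 n p t - (α * J1 + β * J2))
    with (α * (RS H1 g1 n p t - J1) + β * (RS H2 g2 n p t - J2)) by ring.
  eapply Rle_lt_trans; [apply lin_bound; left; eauto|]. auto.
Qed.

Lemma HS_lin_gen H1 g1 H2 g2 H3 g3 α β I1 I2 :
  (forall n p t, RS H3 g3 n p t = α * RS H1 g1 n p t + β * RS H2 g2 n p t) ->
  HS_integral H1 g1 I1 -> HS_integral H2 g2 I2 -> HS_integral H3 g3 (α * I1 + β * I2).
Proof.
  intros hR [J1 [hJ1 l1]] [J2 [hJ2 l2]].
  exists (fun a b => α * J1 a b + β * J2 a b). split.
  - intros a b hab. apply (HS_ab_lin H1 g1 H2 g2); auto.
  - intros eps heps. destruct (lin_tolerance α β eps heps) as [he' hsmall].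
    destruct (l1 _ he') as [M1 k1]. destruct (l2 _ he') as [M2 k2].
    exists (Rmax M1 M2). intros a b ha hb.
    assert (k1' := k1 a b ltac:(generalize (Rmax_l M1 M2); lra) ltac:(generalize (Rmax_l M1 M2); lra)).
    assert (k2' := k2 a b ltac:(generalize (Rmax_r M1 M2); lra) ltac:(generalize (Rmax_r M1 M2); lra)).
    replace (α * J1 a b + β * J2 a b - (α * I1 + β * I2)) with (α * (J1 a b - I1) + β * (J2 a b - I2)) by ring.
    eapply Rle_lt_trans; [apply lin_bound; left; eauto|]. auto.
Qed.

Lemma HS_int_lin_H H1 H2 g α β I1 I2 : HS_integral H1 g I1 -> HS_integral H2 g I2 ->
  HS_int (fun y => α * H1 y + β * H2 y) g = α * I1 + β * I2.
Proof.
  intros h1 h2. apply HS_int_eq. apply (HS_lin_gen H1 g H2 g); auto.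
  intros. unfold RS. rewrite <- rsum_lin. apply rsum_ext. intros; ring.
Qed.

Lemma HS_int_lin_g H g1 g2 α β I1 I2 : HS_integral H g1 I1 -> HS_integral H g2 I2 ->
  HS_int H (fun y => α * g1 y + β * g2 y) = α * I1 + β * I2.
Proof.
  intros h1 h2. apply HS_int_eq. apply (HS_lin_gen H g1 H g2); auto.
  intros. unfold RS. rewrite <- rsum_lin. apply rsum_ext. intros; ring.
Qed.

Lemma HS_int_sub H1 H2 g I1 I2 : HS_integral H1 g I1 -> HS_integral H2 g I2 ->
  HS_int (fun y => H1 y - H2 y) g = I1 - I2.
Proof.
  intros h1 h2. replace (I1 - I2) with (1 * I1 + (-1) * I2) by ring.
  rewrite <- (HS_int_lin_H H1 H2 g 1 (-1) I1 I2 h1 h2). f_equal.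
  apply functional_extensionality. intros; ring.
Qed.

Lemma HS_const c g gP gM : lim_pinf g gP -> lim_minf g gM -> HS_integral (fun _ => c) g (c * (gP - gM)).
Proof.
  intros hP hM.
  assert (hR : forall n p t, RS (fun _ => c) g n p t = c * (g (p n) - g (p 0%nat))).
  { intros. unfold RS. rewrite <- (rsum_tele n (fun i => g (p i))), <- (Rplus_0_r (c * _)).
    rewrite <- (Rmult_0_l (rsum n (fun i => g (p i)))), <- rsum_lin.
    apply rsum_ext; intros; ring. }
  exists (fun a b => c * (g b - g a)). split.
  - intros a b hab eps he. exists (fun _ => 1). split; [intros; lra|].
    intros n p t h0 h1 _. change (Rabs (RS (fun _ => c) g n p t - c * (g b - g a)) < eps).
    rewrite hR, h0, h1, Rminus_diag, Rabs_R0. auto.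
  - intros eps he. destruct (lin_tolerance c (- c) eps he) as [he' hsmall].
    destruct (hP _ he') as [M1 k1]. destruct (hM _ he') as [M2 k2].
    exists (Rabs M1 + Rabs M2). intros a b ha hb.
    assert (k1' := k1 b ltac:(generalize (Rle_abs M1) (Rabs_pos M2); lra)).
    assert (k2' := k2 a ltac:(generalize (Rle_abs (- M2)) (Rabs_pos M1); rewrite Rabs_Ropp; lra)).
    replace (c * (g b - g a) - c * (gP - gM)) with (c * (g b - gP) + (- c) * (g a - gM)) by ring.
    eapply Rle_lt_trans; [apply lin_bound; left; eauto|]. auto.
Qed.

Lemma HS_gconst H k : HS_integral H (fun _ => k) 0.
Proof.
  exists (fun _ _ => 0). split.
  - intros a b hab eps he. exists (fun _ => 1). split; [intros; lra|].
    intros n p t _ _ _. rewrite rsum_zero; [rewrite Rminus_0_r, Rabs_R0; auto|]. intros; ring.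
  - intros eps he. exists 0. intros. rewrite Rminus_diag, Rabs_R0. auto.
Qed.

(** ** The variation function of a BV function *)

Definition var_sums_upto g x := fun r => exists n x' y', disjoint_family n x' y' /\
   (forall i, (i < n)%nat -> y' i <= x) /\ r = rsum n (fun i => Rabs (g (x' i) - g (y' i))).

Definition var_fun g x := Rsup (var_sums_upto g x).

Section BVfun.
Variable g : R -> R.
Hypothesis hg : BV g.

Lemma var_sums_upto_var x r : var_sums_upto g x r -> var_sums g r.
Proof. intros [n [x' [y' [h1 [_ h3]]]]]. exists n, x', y'. auto. Qed.

Lemma var_sums_upto_bound x : bound (var_sums_upto g x).
Proof. destruct hg as [M hM]. exists M. intros r hr. apply hM. eapply var_sums_upto_var; eauto. Qed.

Lemma var_sums_upto_0 x : var_sums_upto g x 0.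
Proof.
  exists 0%nat, (fun _ => 0), (fun _ => 0). split; [split; intros; lia|]. split; [intros; lia|]. reflexivity.
Qed.

Lemma var_bound : bound (var_sums g).
Proof. destruct hg as [M hM]. exists M. intros r hr. apply hM; auto. Qed.

Lemma variation_nonneg : 0 <= variation g.
Proof. apply Rsup_ge. apply var_bound. apply (var_sums_upto_var 0). apply var_sums_upto_0. Qed.

Lemma var_fun_nonneg x : 0 <= var_fun g x.
Proof. apply Rsup_ge. apply var_sums_upto_bound. apply var_sums_upto_0. Qed.

Lemma var_fun_le_var x : var_fun g x <= variation g.
Proof.
  apply Rsup_le. exists 0; apply var_sums_upto_0. intros r hr. apply Rsup_ge. apply var_bound.
  eapply var_sums_upto_var; eauto.
Qed.

(** Adding the interval  (x,y)  to a family left of  x  gives a family left of  y. *)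
Lemma var_fun_step x y : x <= y -> var_fun g x + Rabs (g y - g x) <= var_fun g y.
Proof.
  intros hxy. destruct (Req_dec x y) as [e|ne].
  - subst. rewrite Rminus_diag, Rabs_R0. lra.
  - cut (var_fun g x <= var_fun g y - Rabs (g y - g x)). lra.
    apply Rsup_le. exists 0; apply var_sums_upto_0.
    intros r [n [x' [y' [[d1 d2] [h2 h3]]]]].
    cut (r + Rabs (g y - g x) <= var_fun g y). lra.
    apply Rsup_ge. apply var_sums_upto_bound.
    exists (S n), (fun i => if Nat.eqb i n then x else x' i), (fun i => if Nat.eqb i n then y else y' i).
    split; [split|split].
    + intros i hi. destruct (Nat.eqb_spec i n); [lra|]. apply d1; lia.
    + intros i j hi hj hij. destruct (Nat.eqb_spec i n); destruct (Nat.eqb_spec j n).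
      * lia.
      * right. apply h2; lia.
      * left. apply h2; lia.
      * apply d2; lia.
    + intros i hi. destruct (Nat.eqb_spec i n); [lra|]. generalize (h2 i ltac:(lia)); lra.
    + simpl. rewrite Nat.eqb_refl. rewrite h3. rewrite Rabs_minus_sym. f_equal.
      apply rsum_ext. intros i hi. replace (Nat.eqb i n) with false; auto. symmetry; apply Nat.eqb_neq; lia.
Qed.

Lemma var_fun_majorant : var_majorant (var_fun g) g.
Proof.
  split; intros x y h; generalize (var_fun_step x y h) (Rabs_pos (g y - g x)); lra.
Qed.

Lemma var_fun_range : exists Vs Vi, range_bounds (var_fun g) Vs Vi /\ 0 <= Vi /\ Vs <= variation g.
Proof.
  set (E1 := fun r => exists x, r = var_fun g x).
  set (E2 := fun r => exists x, r = - var_fun g x).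
  assert (b1 : bound E1). { exists (variation g). intros r [x ->]. apply var_fun_le_var. }
  assert (b2 : bound E2). { exists 0. intros r [x ->]. generalize (var_fun_nonneg x); lra. }
  assert (n1 : exists r, E1 r) by (exists (var_fun g 0); exists 0; auto).
  assert (n2 : exists r, E2 r) by (exists (- var_fun g 0); exists 0; auto).
  exists (Rsup E1), (- Rsup E2). split; [split; [|split]|split].
  - intros x. split.
    + cut (- var_fun g x <= Rsup E2). lra. apply Rsup_ge; auto. exists x; auto.
    + apply Rsup_ge; auto. exists x; auto.
  - intros η hη. destruct (Rsup_approx E1 η b1 n1 hη) as [r [[x ->] h]]. exists x; auto.
  - intros η hη. destruct (Rsup_approx E2 η b2 n2 hη) as [r [[x ->] h]]. exists x; lra.
  - cut (Rsup E2 <= 0). lra. apply Rsup_le; auto. intros r [x ->]. generalize (var_fun_nonneg x); lra.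
  - apply Rsup_le; auto. intros r [x ->]. apply var_fun_le_var.
Qed.

End BVfun.

Lemma majorant_limits v g Vs Vi : var_majorant v g -> range_bounds v Vs Vi ->
  (exists l, lim_pinf g l) /\ (exists l, lim_minf g l).
Proof.
  intros [vm vg] [hb [hB hA]]. split.
  - apply cauchy_pinf. intros e he. destruct (hB (e/2) ltac:(lra)) as [B hBv]. exists B.
    intros x y hx hy. destruct (Rle_dec x y).
    + generalize (vg x y r) (vm B x ltac:(lra)) (hb y). rewrite Rabs_minus_sym. lra.
    + generalize (vg y x ltac:(lra)) (vm B y ltac:(lra)) (hb x). lra.
  - apply cauchy_minf. intros e he. destruct (hA (e/2) ltac:(lra)) as [A hAv]. exists A.
    intros x y hx hy. destruct (Rle_dec x y).
    + generalize (vg x y r) (vm y A ltac:(lra)) (hb x). rewrite Rabs_minus_sym. lra.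
    + generalize (vg y x ltac:(lra)) (vm x A ltac:(lra)) (hb y). lra.
Qed.

Lemma BV_limits g : BV g -> lim_pinf g (val_pinf g) /\ lim_minf g (val_minf g).
Proof.
  intros hg. destruct (var_fun_range g hg) as [Vs [Vi [hb _]]].
  destruct (majorant_limits _ _ _ _ (var_fun_majorant g hg) hb) as [[l1 h1] [l2 h2]].
  rewrite (val_pinf_eq g l1 h1), (val_minf_eq g l2 h2). auto.
Qed.

Lemma cont_fold f x0 : (forall e, 0 < e -> exists a, 0 < a /\ forall x, Rabs (x - x0) < a -> Rabs (f x - f x0) < e)
  -> continuity_pt f x0.
Proof.
  unfold continuity_pt, continue_in, limit1_in, limit_in, D_x, no_cond. simpl. unfold R_dist.
  intros h e he. destruct (h e he) as [a [ha k]]. exists a. split; auto.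
  intros x [_ hx]. apply k; auto.
Qed.

Lemma C0bar_bounded F : C0bar F -> exists K, forall z, Rabs (F z) <= K.
Proof.
  intros [hc [[lP hP] [lM hM]]].
  destruct (hP 1 ltac:(lra)) as [M1 k1]. destruct (hM 1 ltac:(lra)) as [M2 k2].
  set (m := Rmin M2 M1). set (m' := Rmax M1 M2).
  assert (hmm : m <= m') by (unfold m, m'; generalize (Rmin_r M2 M1) (Rmax_l M1 M2); lra).
  destruct (continuity_ab_maj F m m' hmm (fun c _ => hc c)) as [Mx [hMx _]].
  destruct (continuity_ab_min F m m' hmm (fun c _ => hc c)) as [mx [hmx _]].
  exists (Rabs lP + 1 + Rabs lM + 1 + Rabs (F Mx) + Rabs (F mx)). intros z.
  generalize (Rabs_pos lP) (Rabs_pos lM) (Rabs_pos (F Mx)) (Rabs_pos (F mx)). intros.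
  destruct (Rlt_dec M1 z) as [h1|h1]; [|destruct (Rlt_dec z M2) as [h2|h2]].
  - specialize (k1 z h1). generalize (Rabs_triang_inv (F z) lP). lra.
  - specialize (k2 z h2). generalize (Rabs_triang_inv (F z) lM). lra.
  - assert (hz : m <= z <= m') by (unfold m, m'; generalize (Rmin_l M2 M1) (Rmax_l M1 M2); lra).
    specialize (hMx z hz). specialize (hmx z hz).
    apply Rabs_le. generalize (Rle_abs (F Mx)) (Rle_abs (- F mx)). rewrite Rabs_Ropp. lra.
Qed.

(** Continuity plus limits at  +-oo  gives uniform continuity (Heine on a
    compact interval, the limits outside it). *)
Lemma C0bar_unif_cont F : C0bar F -> unif_cont F.
Proof.
  intros [hc [[lP hP] [lM hM]]] e he.
  destruct (hP (e/2) ltac:(lra)) as [M1 k1]. destruct (hM (e/2) ltac:(lra)) as [M2 k2].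
  set (A := Rmin M2 M1 - 1). set (B := Rmax M1 M2 + 1).
  assert (hAB : A < B) by (unfold A, B; generalize (Rmin_r M2 M1) (Rmax_l M1 M2); lra).
  destruct (@Heine_cor1 F A B hAB (fun x _ => hc x) (mkposreal e he)) as [[δ0 hδ0] [_ h]]. simpl in h.
  exists (Rmin δ0 1). split; [apply Rmin_glb_lt; lra|].
  intros x y hxy. assert (l1 := Rmin_l δ0 1). assert (l2 := Rmin_r δ0 1).
  apply Rabs_def2 in hxy as [u w].
  assert (hA1 : A + 1 <= M2) by (unfold A; generalize (Rmin_l M2 M1); lra).
  assert (hB1 : M1 <= B - 1) by (unfold B; generalize (Rmax_l M1 M2); lra).
  assert (tail : forall l, Rabs (F x - l) < e / 2 -> Rabs (F y - l) < e / 2 -> Rabs (F x - F y) <= e).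
  { intros l q1 q2. replace (F x - F y) with ((F x - l) - (F y - l)) by ring.
    eapply Rle_trans; [apply Rabs_triang|]. rewrite Rabs_Ropp. lra. }
  destruct (Rle_dec A x); destruct (Rle_dec x B); destruct (Rle_dec A y); destruct (Rle_dec y B).
  all: try (left; apply h; [lra|lra|apply Rabs_def1; lra]).
  all: try (apply (tail lP); apply k1; lra).
  all: apply (tail lM); apply k2; lra.
Qed.

Lemma unif_cont_reflect F x : unif_cont F -> unif_cont (fun y => F (x - y)).
Proof.
  intros hU e he. destruct (hU e he) as [η [hη h]]. exists η. split; auto.
  intros y1 y2 hy. apply h. rewrite Rabs_minus_sym. replace (x - y2 - (x - y1)) with (y1 - y2) by ring. auto.
Qed.

Lemma unif_cont_sub H1 H2 : unif_cont H1 -> unif_cont H2 -> unif_cont (fun y => H1 y - H2 y).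
Proof.
  intros h1 h2 e he. destruct (h1 (e/2) ltac:(lra)) as [η1 [hη1 k1]]. destruct (h2 (e/2) ltac:(lra)) as [η2 [hη2 k2]].
  exists (Rmin η1 η2). split; [apply Rmin_glb_lt; auto|]. intros x y hxy.
  generalize (k1 x y ltac:(generalize (Rmin_l η1 η2); lra)) (k2 x y ltac:(generalize (Rmin_r η1 η2); lra)). intros.
  replace (H1 x - H2 x - (H1 y - H2 y)) with ((H1 x - H1 y) - (H2 x - H2 y)) by ring.
  eapply Rle_trans. apply Rabs_triang. rewrite Rabs_Ropp. lra.
Qed.

Lemma unif_cont_const c : unif_cont (fun _ => c).
Proof. intros e he. exists 1. split; [lra|]. intros. rewrite Rminus_diag, Rabs_R0. lra. Qed.

Lemma alex_norm_bounds F : Bc F -> (forall a b, Rabs (F b - F a) <= alex_norm F) /\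
  (forall z, Rabs (F z) <= alex_norm F) /\ Rabs (val_pinf F) <= alex_norm F.
Proof.
  intros [hC hM]. destruct (C0bar_bounded F hC) as [K hK].
  assert (hb : bound (fun r => exists a b, r = Rabs (F b - F a))).
  { exists (K + K). intros r [a [b ->]]. eapply Rle_trans. apply Rabs_triang. rewrite Rabs_Ropp.
    generalize (hK a) (hK b). lra. }
  assert (h1 : forall a b, Rabs (F b - F a) <= alex_norm F).
  { intros. apply Rsup_ge; auto. exists a, b; auto. }
  assert (h2 : forall z, Rabs (F z) <= alex_norm F).
  { intros z. apply le_eps. intros e he. destruct (hM e he) as [M k].
    specialize (k (M - 1) ltac:(lra)). rewrite Rminus_0_r in k. specialize (h1 (M - 1) z).
    replace (F z) with ((F z - F (M - 1)) + F (M - 1)) by ring.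
    eapply Rle_trans. apply Rabs_triang. lra. }
  split; auto. split; auto.
  destruct hC as [_ [[lP hP] _]]. rewrite (val_pinf_eq F lP hP).
  apply le_eps. intros e he. destruct (hP e he) as [M k]. specialize (k (M + 1) ltac:(lra)).
  specialize (h2 (M + 1)).
  replace lP with (F (M + 1) - (F (M + 1) - lP)) by ring.
  eapply Rle_trans. apply Rabs_triang. rewrite Rabs_Ropp. lra.
Qed.

Lemma HS_exists H g K : unif_cont H -> (forall t, Rabs (H t) <= K) -> BV g -> HS_integral H g (HS_int H g).
Proof.
  intros hU hK hg. destruct (var_fun_range g hg) as [Vs [Vi [hb _]]].
  rewrite (HS_int_line H g (var_fun g) K Vs Vi hU hK (var_fun_majorant g hg) hb). apply RS_int_line_HS.
Qed.

Lemma HS_bound_var H g K : unif_cont H -> (forall t, Rabs (H t) <= K) -> BV g -> Rabs (HS_int H g) <= K * variation g.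
Proof.
  intros hU hK hg. destruct (var_fun_range g hg) as [Vs [Vi [hb [hVi hVs]]]].
  assert (hK0 : 0 <= K) by (generalize (hK 0) (Rabs_pos (H 0)); lra).
  apply (HS_int_bound H g (var_fun g) K Vs Vi hU hK (var_fun_majorant g hg) hb).
  intros a b hab δ hδ _ n p t hc. eapply Rle_trans. apply (RS_bound H g (var_fun g) δ K (var_fun_majorant g hg) hK _ _ _ _ _ hc).
  apply Rmult_le_compat_l; auto. destruct hb as [hb _]. generalize (hb a) (hb b). lra.
Qed.

Lemma HS_tail_left H g v K Vs Vi ε c : unif_cont H -> (forall t, Rabs (H t) <= K) ->
  var_majorant v g -> range_bounds v Vs Vi ->
  ε <= K -> (forall t, t <= c -> Rabs (H t) <= ε) ->
  Rabs (HS_int H g) <= ε * (Vs - Vi) + (K - ε) * (Vs - v (c - 1)).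
Proof.
  intros hU hK hv hb heK hs.
  assert (hε : 0 <= ε) by (generalize (hs c (Rle_refl _)) (Rabs_pos (H c)); lra).
  apply (HS_int_bound H g v K Vs Vi hU hK hv hb).
  intros a b hab δ hδ hδ1 n p t hc.
  eapply Rle_trans. apply (RS_bound_left H g v δ ε K c hv heK hs hK _ _ _ _ _ hc (Rmin b (c - 1))).
  - apply Rmin_l.
  - eapply Rle_trans. apply Rmin_r. eapply Rle_trans; [|apply Rmax_r]. lra.
  - destruct hb as [hb _]. destruct hv as [vm _].
    assert (ε * (v b - v a) <= ε * (Vs - Vi)) by (apply Rmult_le_compat_l; auto; generalize (hb a) (hb b); lra).
    assert ((K - ε) * (v b - v (Rmin b (c - 1))) <= (K - ε) * (Vs - v (c - 1))).
    { apply Rmult_le_compat_l; [lra|]. unfold Rmin. destruct (Rle_dec b (c - 1)).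
      - rewrite Rminus_diag. generalize (hb (c - 1)). lra.
      - generalize (hb b). lra. }
    lra.
Qed.

Lemma HS_tail_right H g v K Vs Vi ε c : unif_cont H -> (forall t, Rabs (H t) <= K) ->
  var_majorant v g -> range_bounds v Vs Vi ->
  ε <= K -> (forall t, c <= t -> Rabs (H t) <= ε) ->
  Rabs (HS_int H g) <= ε * (Vs - Vi) + (K - ε) * (v (c + 1) - Vi).
Proof.
  intros hU hK hv hb heK hs.
  assert (hε : 0 <= ε) by (generalize (hs c (Rle_refl _)) (Rabs_pos (H c)); lra).
  apply (HS_int_bound H g v K Vs Vi hU hK hv hb).
  intros a b hab δ hδ hδ1 n p t hc.
  eapply Rle_trans. apply (RS_bound_right H g v δ ε K c hv heK hs hK _ _ _ _ _ hc (Rmax a (c + 1))).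
  - apply Rmax_l.
  - eapply Rle_trans. apply Rmin_r. eapply Rle_trans; [|apply Rmax_r]. lra.
  - destruct hb as [hb _]. destruct hv as [vm _].
    assert (ε * (v b - v a) <= ε * (Vs - Vi)) by (apply Rmult_le_compat_l; auto; generalize (hb a) (hb b); lra).
    assert ((K - ε) * (v (Rmax a (c + 1)) - v a) <= (K - ε) * (v (c + 1) - Vi)).
    { apply Rmult_le_compat_l; [lra|]. unfold Rmax. destruct (Rle_dec a (c + 1)).
      - generalize (hb a). lra.
      - rewrite Rminus_diag. generalize (hb (c + 1)). lra. }
    lra.
Qed.

Lemma tail_tolerances e T K : 0 < e -> 0 <= T -> 0 <= K ->
  exists ε η, 0 < ε <= 1 /\ 0 < η /\ ε * T + K * η < e.
Proof.
  intros he hT hK.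
  exists (Rmin 1 (e / (2 * (T + 1)))), (e / (4 * (K + 1))).
  assert (h1 : 0 < e / (2 * (T + 1))) by (apply Rdiv_lt_0_compat; lra).
  assert (hε : 0 < Rmin 1 (e / (2 * (T + 1)))) by (apply Rmin_glb_lt; lra).
  assert (hε2 := Rmin_r 1 (e / (2 * (T + 1)))).
  split; [split; [auto|apply Rmin_l]|]. split; [apply Rdiv_lt_0_compat; lra|].
  assert (A : Rmin 1 (e / (2 * (T + 1))) * T <= e / (2 * (T + 1)) * T) by (apply Rmult_le_compat_r; auto).
  assert (e / (2 * (T + 1)) * (2 * (T + 1)) = e) by (field; lra).
  assert (e / (4 * (K + 1)) * (4 * (K + 1)) = e) by (field; lra).
  nra.
Qed.

(** ** The convolution  f*g  for  f = F'  with  F in B_C  and  g in BV *)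

Section Conv.
Variables F g : R -> R.
Hypotheses (hF : Bc F) (hg : BV g).

Lemma F_lim : lim_pinf F (val_pinf F).
Proof. destruct hF as [[_ [[l hl] _]] _]. rewrite (val_pinf_eq F l hl); auto. Qed.

Lemma F_unif_cont : unif_cont F.
Proof. apply C0bar_unif_cont. apply hF. Qed.

Lemma F_bounded : exists K, 0 <= K /\ forall z, Rabs (F z) <= K.
Proof.
  destruct (C0bar_bounded F (proj1 hF)) as [K hK]. exists K. split; auto.
  generalize (hK 0) (Rabs_pos (F 0)); lra.
Qed.

Lemma refl_prim_lim x : lim_pinf (refl_prim F x) (val_pinf F).
Proof.
  intros e he. destruct hF as [_ hM]. destruct (hM e he) as [M k]. exists (x - M).
  intros y hy. unfold refl_prim. replace (val_pinf F - F (x - y) - val_pinf F) with (- (F (x - y) - 0)) by ring.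
  rewrite Rabs_Ropp. apply k. lra.
Qed.

Lemma val_refl_prim x : val_pinf (refl_prim F x) = val_pinf F.
Proof. apply val_pinf_eq. apply refl_prim_lim. Qed.

Lemma refl_prim_integrable x : HS_integral (refl_prim F x) g (HS_int (refl_prim F x) g).
Proof.
  destruct F_bounded as [K [hK0 hK]].
  apply (HS_exists _ g (Rabs (val_pinf F) + K)); auto.
  - apply (unif_cont_sub _ _ (unif_cont_const _) (unif_cont_reflect F x F_unif_cont)).
  - intros t. unfold refl_prim. eapply Rle_trans. apply Rabs_triang. rewrite Rabs_Ropp.
    generalize (hK (x - t)); lra.
Qed.

Lemma reflect_integrable x : HS_integral (fun y => F (x - y)) g (HS_int (fun y => F (x - y)) g).
Proof.
  destruct F_bounded as [K [hK0 hK]].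
  apply (HS_exists _ g K); auto. apply unif_cont_reflect. apply F_unif_cont.
Qed.

Lemma conv_formula x : conv F g x = val_pinf F * val_minf g + HS_int (fun y => F (x - y)) g.
Proof.
  unfold conv. rewrite val_refl_prim.
  assert (E : refl_prim F x = fun y => 1 * (fun _ => val_pinf F) y + (-1) * (fun y => F (x - y)) y).
  { apply functional_extensionality. intros y. unfold refl_prim. ring. }
  rewrite E. destruct (BV_limits g hg) as [h1 h2].
  rewrite (HS_int_lin_H _ _ g 1 (-1) _ _ (HS_const (val_pinf F) g _ _ h1 h2) (reflect_integrable x)).
  ring.
Qed.

Lemma conv_bound x : Rabs (conv F g x) <= alex_norm F * bv_norm g.
Proof.
  rewrite conv_formula. destruct (alex_norm_bounds F hF) as [_ [h2 h3]].
  assert (hB := HS_bound_var (fun y => F (x - y)) g (alex_norm F) (unif_cont_reflect F x F_unif_cont) (fun t => h2 (x - t)) hg).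
  unfold bv_norm. eapply Rle_trans. apply Rabs_triang. rewrite Rabs_mult.
  assert (Rabs (val_pinf F) * Rabs (val_minf g) <= alex_norm F * Rabs (val_minf g)).
  { apply Rmult_le_compat_r; auto. apply Rabs_pos. }
  lra.
Qed.

(** Continuity:  |f*g(x) - f*g(x0)| <= osc_{|x-x0|}(F) * V g. *)
Lemma conv_cont : continuity (conv F g).
Proof.
  intros x0. apply cont_fold. intros e he.
  set (ε := e / (2 * (variation g + 1))).
  assert (hv0 := variation_nonneg g hg).
  assert (hε : 0 < ε) by (unfold ε; apply Rdiv_lt_0_compat; lra).
  destruct (F_unif_cont ε hε) as [η [hη k]]. exists η. split; auto. intros x hx.
  rewrite !conv_formula.
  replace (val_pinf F * val_minf g + HS_int (fun y => F (x - y)) g - (val_pinf F * val_minf g + HS_int (fun y => F (x0 - y)) g))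
    with (HS_int (fun y => F (x - y)) g - HS_int (fun y => F (x0 - y)) g) by ring.
  rewrite <- (HS_int_sub _ _ g _ _ (reflect_integrable x) (reflect_integrable x0)).
  eapply Rle_lt_trans. apply (HS_bound_var _ g ε); auto.
  - apply unif_cont_sub; apply unif_cont_reflect; apply F_unif_cont.
  - intros t. apply k. replace (x - t - (x0 - t)) with (x - x0) by ring. auto.
  - assert (ε * (variation g + 1) = e / 2) by (unfold ε; field; lra). nra.
Qed.

(** At  +oo:  f*g(x) - F(oo) g(oo) = int (F(x-y) - F(oo)) dg(y), and the
    integrand is small except where  y  is large, where  g  barely varies. *)
Lemma conv_lim_pinf : lim_pinf (conv F g) (val_pinf F * val_pinf g).
Proof.
  intros e he.
  destruct (var_fun_range g hg) as [Vs [Vi [hb _]]].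
  assert (hTV : 0 <= Vs - Vi) by (destruct hb as [hb _]; generalize (hb 0); lra).
  destruct F_bounded as [K [hK0 hK]].
  set (K2 := K + Rabs (val_pinf F) + 1).
  assert (hK2 : 1 <= K2) by (unfold K2; generalize (Rabs_pos (val_pinf F)); lra).
  destruct (tail_tolerances e (Vs - Vi) K2 he hTV ltac:(lra)) as [ε [η [hε [hη hsmall]]]].
  destruct hb as [hb1 [hB hA]]. destruct (hB η hη) as [B hBv].
  destruct (F_lim ε ltac:(lra)) as [MF kF].
  exists (B + 1 + MF). intros x hx.
  destruct (BV_limits g hg) as [h1 h2].
  rewrite conv_formula.
  replace (val_pinf F * val_minf g + HS_int (fun y => F (x - y)) g - val_pinf F * val_pinf g)
    with (HS_int (fun y => F (x - y)) g - val_pinf F * (val_pinf g - val_minf g)) by ring.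
  rewrite <- (HS_int_sub _ _ g _ _ (reflect_integrable x) (HS_const (val_pinf F) g _ _ h1 h2)).
  eapply Rle_lt_trans.
  - apply (HS_tail_left _ g (var_fun g) K2 Vs Vi ε (B + 1)).
    + apply unif_cont_sub. apply unif_cont_reflect, F_unif_cont. apply unif_cont_const.
    + intros t. eapply Rle_trans. apply Rabs_triang. rewrite Rabs_Ropp. generalize (hK (x - t)). unfold K2. lra.
    + apply var_fun_majorant; auto.
    + split; auto.
    + lra.
    + intros t ht. left. apply kF. lra.
  - replace (B + 1 - 1) with B by ring.
    assert ((K2 - ε) * (Vs - var_fun g B) <= K2 * η) by (generalize (hb1 B); intros; apply Rmult_le_compat; lra).
    lra.
Qed.

(** At  -oo:  f*g(x) - F(oo) g(-oo) = int F(x-y) dg(y), small since  F(-oo) = 0. *)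
Lemma conv_lim_minf : lim_minf (conv F g) (val_pinf F * val_minf g).
Proof.
  intros e he.
  destruct (var_fun_range g hg) as [Vs [Vi [hb _]]].
  assert (hTV : 0 <= Vs - Vi) by (destruct hb as [hb _]; generalize (hb 0); lra).
  destruct F_bounded as [K [hK0 hK]].
  destruct (tail_tolerances e (Vs - Vi) (K + 1) he hTV ltac:(lra)) as [ε [η [hε [hη hsmall]]]].
  destruct hb as [hb1 [hB hA]]. destruct (hA η hη) as [A hAv].
  destruct hF as [_ hM]. destruct (hM ε ltac:(lra)) as [MF kF].
  exists (A - 1 + MF). intros x hx.
  rewrite conv_formula.
  replace (val_pinf F * val_minf g + HS_int (fun y => F (x - y)) g - val_pinf F * val_minf g)
    with (HS_int (fun y => F (x - y)) g) by ring.
  eapply Rle_lt_trans.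
  - apply (HS_tail_right _ g (var_fun g) (K + 1) Vs Vi ε (A - 1)).
    + apply unif_cont_reflect, F_unif_cont.
    + intros t. generalize (hK (x - t)). lra.
    + apply var_fun_majorant; auto.
    + split; auto.
    + lra.
    + intros t ht. left. rewrite <- (Rminus_0_r (F (x - t))). apply kF. lra.
  - replace (A - 1 + 1) with A by ring.
    assert ((K + 1 - ε) * (var_fun g A - Vi) <= (K + 1) * η) by (generalize (hb1 A); intros; apply Rmult_le_compat; lra).
    lra.
Qed.

Lemma conv_well_defined : (forall x, exists I, HS_integral (refl_prim F x) g I) /\ C0bar (conv F g).
Proof.
  split; [intros x; eexists; apply refl_prim_integrable|].
  split; [apply conv_cont|]. split.
  - eexists; apply conv_lim_pinf.
  - eexists; apply conv_lim_minf.
Qed.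

End Conv.

Lemma conv_linear_g F g1 g2 a b x : Bc F -> BV g1 -> BV g2 ->
  conv F (fun y => a * g1 y + b * g2 y) x = a * conv F g1 x + b * conv F g2 x.
Proof.
  intros hF hg1 hg2. unfold conv.
  destruct (BV_limits g1 hg1) as [p1 _]. destruct (BV_limits g2 hg2) as [p2 _].
  rewrite (val_pinf_eq _ _ (lim_pinf_lin _ _ _ _ a b p1 p2)).
  rewrite (HS_int_lin_g _ _ _ a b _ _ (refl_prim_integrable F g1 hF hg1 x) (refl_prim_integrable F g2 hF hg2 x)).
  ring.
Qed.

Lemma conv_linear_F F1 F2 g a b x : Bc F1 -> Bc F2 -> BV g ->
  conv (fun y => a * F1 y + b * F2 y) g x = a * conv F1 g x + b * conv F2 g x.
Proof.
  intros hF1 hF2 hg. unfold conv.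
  assert (hv3 : val_pinf (fun y => a * F1 y + b * F2 y) = a * val_pinf F1 + b * val_pinf F2).
  { apply val_pinf_eq. apply lim_pinf_lin; apply F_lim; auto. }
  assert (E : refl_prim (fun y => a * F1 y + b * F2 y) x = fun y => a * refl_prim F1 x y + b * refl_prim F2 x y).
  { apply functional_extensionality. intros y. unfold refl_prim. rewrite hv3. ring. }
  rewrite E.
  rewrite (val_pinf_eq _ _ (lim_pinf_lin _ _ _ _ a b (refl_prim_lim F1 hF1 x) (refl_prim_lim F2 hF2 x))).
  rewrite (HS_int_lin_H _ _ g a b _ _ (refl_prim_integrable F1 g hF1 hg x) (refl_prim_integrable F2 g hF2 hg x)).
  rewrite !val_refl_prim; auto. ring.
Qed.

Lemma sup_norm_le h C : (forall x, Rabs (h x) <= C) -> sup_norm h <= C.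
Proof.
  intros hC. apply Rsup_le. exists (Rabs (h 0)), 0; auto. intros r [x ->]. auto.
Qed.

Lemma sup_norm_const c : sup_norm (fun _ => c) = Rabs c.
Proof.
  apply Rle_antisym. apply sup_norm_le. intros; lra.
  apply Rsup_ge. exists (Rabs c). intros r [x ->]. lra. exists 0; auto.
Qed.

Lemma conv_sup_bound F g : Bc F -> BV g -> sup_norm (conv F g) <= alex_norm F * bv_norm g.
Proof. intros hF hg. apply sup_norm_le. intros x. apply conv_bound; auto. Qed.

(** A nonzero BV function has positive BV norm: if  g(-oo) = 0  then
    |g(x)| <= V g  because  g  is small far to the left. *)
Lemma bv_norm_pos g x : BV g -> g x <> 0 -> 0 < bv_norm g.
Proof.
  intros hg hx. unfold bv_norm. assert (hv := variation_nonneg g hg).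
  destruct (Req_dec (val_minf g) 0) as [e|ne].
  - rewrite e, Rabs_R0, Rplus_0_l.
    destruct (BV_limits g hg) as [_ hM]. rewrite e in hM.
    assert (hgx : 0 < Rabs (g x)) by (apply Rabs_pos_lt; auto).
    destruct (hM (Rabs (g x) / 2) ltac:(lra)) as [M k].
    set (y := Rmin (M - 1) (x - 1)).
    assert (hyM : y < M) by (unfold y; generalize (Rmin_l (M - 1) (x - 1)); lra).
    assert (hyx : y <= x) by (unfold y; generalize (Rmin_r (M - 1) (x - 1)); lra).
    specialize (k y hyM). rewrite Rminus_0_r in k.
    destruct (var_fun_majorant g hg) as [_ vg]. specialize (vg y x hyx).
    assert (h1 := var_fun_nonneg g hg y). assert (h2 := var_fun_le_var g hg x).
    generalize (Rabs_triang_inv (g x) (g y)). lra.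
  - generalize (Rabs_pos_lt _ ne). lra.
Qed.

Lemma alex_norm_pos F x : Bc F -> F x <> 0 -> 0 < alex_norm F.
Proof.
  intros hF hx. destruct (alex_norm_bounds F hF) as [_ [h _]]. generalize (h x) (Rabs_pos_lt _ hx). lra.
Qed.

Lemma ratio_le a b c : 0 < b -> a <= c * b -> a / b <= c.
Proof.
  intros hb h. apply Rmult_le_reg_r with b; auto. unfold Rdiv. rewrite Rmult_assoc, Rinv_l; lra.
Qed.

Lemma Phi_ratio_le F : Bc F -> forall r, (exists g, BV g /\ (exists x, g x <> 0) /\
  r = sup_norm (conv F g) / bv_norm g) -> r <= alex_norm F.
Proof.
  intros hF r [g [hg [[x hx] ->]]]. apply ratio_le; [apply (bv_norm_pos g x hg hx)|].
  apply conv_sup_bound; auto.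
Qed.

Lemma Psi_ratio_le g : BV g -> forall r, (exists F, Bc F /\ (exists x, F x <> 0) /\
  r = sup_norm (conv F g) / alex_norm F) -> r <= bv_norm g.
Proof.
  intros hg r [F [hF [[x hx] ->]]]. apply ratio_le; [apply (alex_norm_pos F x hF hx)|].
  rewrite Rmult_comm. apply conv_sup_bound; auto.
Qed.

(** ** Extremal examples: the ramp primitive and the constant  1 *)

Lemma const_BV c : BV (fun _ => c).
Proof.
  exists 0. intros r [n [x [y [_ ->]]]]. rewrite rsum_zero; [lra|]. intros. rewrite Rminus_diag, Rabs_R0; auto.
Qed.

Lemma const_bv_norm c : bv_norm (fun _ => c) = Rabs c.
Proof.
  unfold bv_norm. rewrite (val_minf_eq _ c).
  - unfold variation. replace (Rsup (var_sums (fun _ => c))) with 0; [ring|].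
    apply Rle_antisym.
    + apply Rsup_ge. apply (var_bound _ (const_BV c)). apply (var_sums_upto_var _ 0), var_sums_upto_0.
    + apply Rsup_le. exists 0; apply (var_sums_upto_var _ 0), var_sums_upto_0. intros r [n [x [y [_ ->]]]].
      rewrite rsum_zero; [lra|]. intros. rewrite Rminus_diag, Rabs_R0; auto.
  - intros e he. exists 0. intros. rewrite Rminus_diag, Rabs_R0; auto.
Qed.

(** The ramp  clamp(x, 0, 1), primitive of the indicator of  [0,1]. *)
Definition ramp (x : R) := (Rabs x - Rabs (x - 1) + 1) / 2.

Lemma ramp_range x : 0 <= ramp x <= 1.
Proof.
  unfold ramp. unfold Rabs. destruct (Rcase_abs x); destruct (Rcase_abs (x - 1)); split; lra.
Qed.

Lemma ramp_right x : 1 <= x -> ramp x = 1.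
Proof. intros h. unfold ramp. rewrite !Rabs_right; lra. Qed.

Lemma ramp_left x : x <= 0 -> ramp x = 0.
Proof. intros h. unfold ramp. rewrite Rabs_left1, (Rabs_left1 (x - 1)); lra. Qed.

Lemma ramp_nonzero : exists x, ramp x <> 0.
Proof. exists 1. rewrite ramp_right; lra. Qed.

Lemma ramp_Bc : Bc ramp.
Proof.
  split; [split; [|split]|].
  - intros x0. apply cont_fold. intros e he. exists e. split; auto. intros x hx.
    unfold ramp. replace ((Rabs x - Rabs (x - 1) + 1) / 2 - (Rabs x0 - Rabs (x0 - 1) + 1) / 2)
      with ((Rabs x - Rabs x0) / 2 - (Rabs (x - 1) - Rabs (x0 - 1)) / 2) by field.
    eapply Rle_lt_trans. apply Rabs_triang. rewrite Rabs_Ropp. unfold Rdiv. rewrite !Rabs_mult.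
    rewrite (Rabs_right (/ 2)) by lra.
    generalize (Rabs_triang_inv2 x x0) (Rabs_triang_inv2 (x - 1) (x0 - 1)).
    replace (x - 1 - (x0 - 1)) with (x - x0) by ring. intros. lra.
  - exists 1. intros e he. exists 1. intros x hx. rewrite ramp_right, Rminus_diag, Rabs_R0; lra.
  - exists 0. intros e he. exists 0. intros x hx. rewrite ramp_left, Rminus_diag, Rabs_R0; lra.
  - intros e he. exists 0. intros x hx. rewrite ramp_left, Rminus_diag, Rabs_R0; lra.
Qed.

Lemma ramp_alex : alex_norm ramp = 1.
Proof.
  assert (hb : forall a b, Rabs (ramp b - ramp a) <= 1).
  { intros a b. generalize (ramp_range a) (ramp_range b). intros. apply Rabs_le. lra. }
  apply Rle_antisym.
  - apply Rsup_le. exists 0, 0, 0; rewrite Rminus_diag, Rabs_R0; auto.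
    intros r [a [b ->]]. auto.
  - apply Rsup_ge.
    + exists 1. intros r [a [b ->]]. auto.
    + exists 0, 1. rewrite ramp_right, ramp_left; try lra. rewrite Rminus_0_r, Rabs_R1. auto.
Qed.

Lemma conv_ramp_one : conv ramp (fun _ => 1) = fun _ => 1.
Proof.
  apply functional_extensionality. intros x.
  unfold conv. rewrite (val_refl_prim ramp ramp_Bc).
  rewrite (val_pinf_eq ramp 1) by (intros e he; exists 1; intros y hy; rewrite ramp_right, Rminus_diag, Rabs_R0; lra).
  rewrite (val_pinf_eq (fun _ => 1) 1) by (intros e he; exists 0; intros; rewrite Rminus_diag, Rabs_R0; auto).
  rewrite (HS_int_eq _ _ 0 (HS_gconst _ 1)). ring.
Qed.

Lemma op_norm_Phi_ramp : op_norm_Phi ramp = alex_norm ramp.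
Proof.
  apply Rle_antisym.
  - apply Rsup_le; [|exact (Phi_ratio_le ramp ramp_Bc)].
    exists 1, (fun _ => 1). split; [apply const_BV|]. split; [exists 0; lra|].
    rewrite conv_ramp_one, sup_norm_const, const_bv_norm, Rabs_R1. field.
  - rewrite ramp_alex. apply Rsup_ge.
    + exists (alex_norm ramp). exact (Phi_ratio_le ramp ramp_Bc).
    + exists (fun _ => 1). split; [apply const_BV|]. split; [exists 0; lra|].
      rewrite conv_ramp_one, sup_norm_const, const_bv_norm, Rabs_R1. field.
Qed.

Lemma op_norm_Psi_one : op_norm_Psi (fun _ => 1) = bv_norm (fun _ => 1).
Proof.
  assert (hratio : sup_norm (conv ramp (fun _ => 1)) / alex_norm ramp = 1).
  { rewrite conv_ramp_one, sup_norm_const, ramp_alex, Rabs_R1. field. }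
  apply Rle_antisym.
  - apply Rsup_le; [|exact (Psi_ratio_le _ (const_BV 1))].
    exists 1, ramp. split; [apply ramp_Bc|]. split; auto using ramp_nonzero.
  - rewrite const_bv_norm, Rabs_R1. apply Rsup_ge.
    + exists (bv_norm (fun _ => 1)). exact (Psi_ratio_le _ (const_BV 1)).
    + exists ramp. split; [apply ramp_Bc|]. split; auto using ramp_nonzero.
Qed.

Theorem theorem2p1 :
  (* (1) *)
  ((forall F, Bc F ->
      (* Phi_f well defined with values in C^0(extended R) *)
      (forall g, BV g ->
         (forall x, exists I, HS_integral (refl_prim F x) g I) /\
         C0bar (conv F g)) /\
      (* linear *)
      (forall g1 g2 a b, BV g1 -> BV g2 ->
         forall x, conv F (fun y => a * g1 y + b * g2 y) x
                   = a * conv F g1 x + b * conv F g2 x) /\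
      (* bounded *)
      (exists C, forall g, BV g -> sup_norm (conv F g) <= C * bv_norm g) /\
      op_norm_Phi F <= alex_norm F) /\
   (exists F, Bc F /\ (exists x, F x <> 0) /\ op_norm_Phi F = alex_norm F)) /\
  (* (2) *)
  ((forall g, BV g ->
      (forall F, Bc F ->
         (forall x, exists I, HS_integral (refl_prim F x) g I) /\
         C0bar (conv F g)) /\
      (forall F1 F2 a b, Bc F1 -> Bc F2 ->
         forall x, conv (fun y => a * F1 y + b * F2 y) g x
                   = a * conv F1 g x + b * conv F2 g x) /\
      (exists C, forall F, Bc F -> sup_norm (conv F g) <= C * alex_norm F) /\
      op_norm_Psi g <= bv_norm g) /\
   (exists g, BV g /\ (exists x, g x <> 0) /\ op_norm_Psi g = bv_norm g)).
Proof.
  split; split.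
  - intros F hF. split; [|split; [|split]].
    + intros g hg. apply conv_well_defined; auto.
    + intros g1 g2 a b hg1 hg2 x. apply conv_linear_g; auto.
    + exists (alex_norm F). intros g hg. apply conv_sup_bound; auto.
    + apply Rsup_le; [|exact (Phi_ratio_le F hF)].
      exists (sup_norm (conv F (fun _ => 1)) / bv_norm (fun _ => 1)), (fun _ => 1).
      split; [apply const_BV|]. split; [exists 0; lra|auto].
  - exists ramp. split; [apply ramp_Bc|]. split; [apply ramp_nonzero|apply op_norm_Phi_ramp].
  - intros g hg. split; [|split; [|split]].
    + intros F hF. apply conv_well_defined; auto.
    + intros F1 F2 a b hF1 hF2 x. apply conv_linear_F; auto.
    + exists (bv_norm g). intros F hF. rewrite Rmult_comm. apply conv_sup_bound; auto.
    + apply Rsup_le; [|exact (Psi_ratio_le g hg)].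
      exists (sup_norm (conv ramp g) / alex_norm ramp), ramp.
      split; [apply ramp_Bc|]. split; [apply ramp_nonzero|auto].
  - exists (fun _ => 1). split; [apply const_BV|]. split; [exists 0; lra|apply op_norm_Psi_one].
Qed.
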